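(* Let $M^2:l=l(u,v)$, $(u,v)$ in a neighbourhood of the origin in $\mathbb R^2$, be a generalized torus of second type in $S^3$ with non-constant Gauss curvature, parameterized so that: $\langle l_u,l_u\rangle=\langle l_v,l_v\rangle=E(u)$ depends only on $u$, $\langle l_u,l_v\rangle=0$, $\langle l,l\rangle=1$; for the unit normal $n$ of $M^2$ in $S^3$ (unit vector orthogonal to $l,l_u,l_v$) one has $\langle l_{uu},n\rangle=1$, $\langle l_{uv},n\rangle=0$, $\langle l_{vv},n\rangle=-1$; and $l(0,0)=e_1$, $l_u(0,0)=\sqrt{E(0)}\,e_2$, $l_v(0,0)=\sqrt{E(0)}\,e_3$, $n(0,0)=e_4$, where $e_1,e_2,e_3,e_4$ is the standard orthonormal basis of $\mathbb R^4$. Put $z(u)=\ln E(u)$, $s=z(0)$, $t=z'(0)/2$, and $\beta=\sqrt{t^2+2\cosh s}$. Then $z$ is the solution of $$z''+4\sinh z=0,\qquad z(0)=s,\quad z'(0)=2t,$$ and it is given explicitly by $z(u)=\ln\dfrac{\alpha^2\cos^2 h^{-1}(u+u_0)+\sin^2h^{-1}(u+u_0)}{\alpha}$ for suitable constants $\alpha>0$ and $u_0$, where $h(x)=\sqrt{\alpha}\int_0^x\frac{d\tau}{\sqrt{\alpha^2\cos^2\tau+\sin^2\tau}}$ and $h^{-1}$ is its inverse; moreover $$l(u,v)=e^{\frac{z(u)}{2}}p(u)+\frac{e^{\frac{z(u)}{2}}}{\beta^2}\Big[\cos\beta v\,\big(e^{\frac s2}e_1+t\,e_2+e^{-\frac s2}e_4\big)+\beta\sin\beta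 v\,e_3\Big],$$ where $p(u)$ is the $\mathbb R^4$-valued solution of the linear system $$p''(u)+z'(u)p'(u)+\beta^2p(u)=0,$$ $$p(0)=\frac{1}{\beta^2}\Big[e^{-\frac s2}(t^2+e^{-s})e_1-t\,e_2-e^{-\frac s2}e_4\Big],\qquad p'(0)=-t\,e^{-\frac s2}e_1+e_2.$$
   Context: $\mathbb R^4$ carries the standard Euclidean inner product and $S^3$ is its unit sphere. A surface in $S^3$ is minimal if its mean curvature in $S^3$ (with respect to a unit normal orthogonal to the position vector and tangent plane) vanishes. Principal lines are the lines of curvature of the surface in $S^3$. A circle is a curve in $\mathbb R^4$ with constant first Frenet curvature and vanishing higher Frenet curvatures. A generalized torus of second type is a minimal surface in $S^3$ on which one of the families of principal lines is a family of circles. (In the parameterization of the claim the $v$-lines are the circles.) *)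

From Stdlib Require Import Reals.
From Coquelicot Require Import Coquelicot.
Open Scope R_scope.

Definition V4 : Type := (R * R * R * R)%type.
Definition mk4 (a b c d : R) : V4 := (a, b, c, d).
Definition x1 (w : V4) : R := fst (fst (fst w)).
Definition x2 (w : V4) : R := snd (fst (fst w)).
Definition x3 (w : V4) : R := snd (fst w).
Definition x4 (w : V4) : R := snd w.

Definition vadd (w w' : V4) : V4 :=
  mk4 (x1 w + x1 w') (x2 w + x2 w') (x3 w + x3 w') (x4 w + x4 w').
Definition vscal (k : R) (w : V4) : V4 :=
  mk4 (k * x1 w) (k * x2 w) (k * x3 w) (k * x4 w).
Definition vzero : V4 := mk4 0 0 0 0.

Definition dot (w w' : V4) : R :=
  x1 w * x1 w' + x2 w * x2 w' + x3 w * x3 w' + x4 w * x4 w'.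
Definition vnorm (w : V4) : R := sqrt (dot w w).

Definition e1 : V4 := mk4 1 0 0 0.
Definition e2 : V4 := mk4 0 1 0 0.
Definition e3 : V4 := mk4 0 0 1 0.
Definition e4 : V4 := mk4 0 0 0 1.

Definition ex_derive_v (f : R -> V4) (x : R) : Prop :=
  ex_derive (fun y => x1 (f y)) x /\ ex_derive (fun y => x2 (f y)) x /\
  ex_derive (fun y => x3 (f y)) x /\ ex_derive (fun y => x4 (f y)) x.
Definition Dv (f : R -> V4) (x : R) : V4 :=
  mk4 (Derive (fun y => x1 (f y)) x) (Derive (fun y => x2 (f y)) x)
      (Derive (fun y => x3 (f y)) x) (Derive (fun y => x4 (f y)) x).

Definition pu (l : R -> R -> V4) : R -> R -> V4 := fun u v => Dv (fun x => l x v) u.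
Definition pv (l : R -> R -> V4) : R -> R -> V4 := fun u v => Dv (fun y => l u y) v.

Definition su (f : R -> R -> R) : R -> R -> R := fun u v => Derive (fun x => f x v) u.
Definition sv (f : R -> R -> R) : R -> R -> R := fun u v => Derive (fun y => f u y) v.

Fixpoint Cn (n : nat) (D : R -> R -> Prop) (f : R -> R -> R) : Prop :=
  match n with
  | O => forall u v, D u v -> continuity_2d_pt f u v
  | S k =>
      (forall u v, D u v ->
         continuity_2d_pt f u v /\
         ex_derive (fun x => f x v) u /\ ex_derive (fun y => f u y) v) /\
      Cn k D (su f) /\ Cn k D (sv f)
  end.
Definition smooth_on (D : R -> R -> Prop) (f : R -> R -> R) : Prop :=
  forall n, Cn n D f.
Definition smooth_on_v (D : R -> R -> Prop) (l : R -> R -> V4) : Prop :=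
  smooth_on D (fun u v => x1 (l u v)) /\ smooth_on D (fun u v => x2 (l u v)) /\
  smooth_on D (fun u v => x3 (l u v)) /\ smooth_on D (fun u v => x4 (l u v)).

Definition fE (l : R -> R -> V4) u v := dot (pu l u v) (pu l u v).
Definition fF (l : R -> R -> V4) u v := dot (pu l u v) (pv l u v).
Definition fG (l : R -> R -> V4) u v := dot (pv l u v) (pv l u v).
Definition fL (l n : R -> R -> V4) u v := dot (pu (pu l) u v) (n u v).
Definition fM (l n : R -> R -> V4) u v := dot (pv (pu l) u v) (n u v).
Definition fN (l n : R -> R -> V4) u v := dot (pv (pv l) u v) (n u v).

Definition mean_curvature (l n : R -> R -> V4) u v : R :=
  (fE l u v * fN l n u v - 2 * fF l u v * fM l n u v + fG l u v * fL l n u v)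
  / (2 * (fE l u v * fG l u v - fF l u v ^ 2)).

(** (intrinsic) Gauss curvature of the induced metric, Brioschi formula *)
Definition det3 (a11 a12 a13 a21 a22 a23 a31 a32 a33 : R) : R :=
  a11 * (a22 * a33 - a23 * a32) - a12 * (a21 * a33 - a23 * a31)
  + a13 * (a21 * a32 - a22 * a31).
Definition gauss_curvature (l : R -> R -> V4) u v : R :=
  let E := fE l in let F := fF l in let G := fG l in
  (det3 (- sv (sv E) u v / 2 + sv (su F) u v - su (su G) u v / 2)
        (su E u v / 2) (su F u v - sv E u v / 2)
        (sv F u v - su G u v / 2) (E u v) (F u v)
        (sv G u v / 2) (F u v) (G u v)
   - det3 0 (sv E u v / 2) (su G u v / 2)
          (sv E u v / 2) (E u v) (F u v)
          (su G u v / 2) (F u v) (G u v))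
  / (E u v * G u v - F u v ^ 2) ^ 2.

(** * Circles: constant first Frenet curvature kappa > 0, vanishing higher
    Frenet curvatures, i.e. T' = |c'| kappa N, N' = - |c'| kappa T. *)
Definition unit_tangent (c : R -> V4) (x : R) : V4 :=
  vscal (/ vnorm (Dv c x)) (Dv c x).
Definition is_circle_on (I : R -> Prop) (c : R -> V4) : Prop :=
  exists kappa : R, 0 < kappa /\
  exists N : R -> V4, forall x, I x ->
    ex_derive_v c x /\ 0 < vnorm (Dv c x) /\
    vnorm (N x) = 1 /\
    ex_derive_v (unit_tangent c) x /\ ex_derive_v N x /\
    Dv (unit_tangent c) x = vscal (vnorm (Dv c x) * kappa) (N x) /\
    Dv N x = vscal (- (vnorm (Dv c x) * kappa)) (unit_tangent c x).

Definition h_fun (alpha x : R) : R :=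
  sqrt alpha * RInt (fun tau => / sqrt (alpha ^ 2 * cos tau ^ 2 + sin tau ^ 2)) 0 x.

(* The frame (l, l_u, l_v, n) is orthogonal with Gram matrix diag (1, E, E, 1), so
   differentiating the prescribed inner products gives the Gauss-Weingarten equations
     l_uu = G l_u - E l + n,  l_uv = G l_v,  l_vv = - G l_u - E l - n,  n_v = l_v / E,
   with G = E' / 2E.  Their compatibility (the Gauss equation) reads
   E'' = E'^2 / E - 2 E^2 + 2, i.e. z'' + 4 sinh z = 0 for z = ln E, with first integral
   (z'/2)^2 + 2 cosh z = beta^2.  The explicit solutions zeta_alpha (h^-1 (u + u0)) realise
   every initial value, and a Gronwall estimate in the variable w = h^-1 (u + u0) shows
   that z is one of them.
   In the v-direction, l_v / sqrt E does not depend on u and solves y'' = - beta^2 y, so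
   it is the velocity of an explicit circle; integrating in v gives
   l = sqrt E (p(u) + circle(v)), and p satisfies the stated linear equation by the Gauss
   formulas and the first integral. *)

From Stdlib Require Import Reals Lra Psatz.
From Coquelicot Require Import Coquelicot.
Open Scope R_scope.

(* Coquelicot states derivatives over [R_AbsRing]; [ring] and [field] need the goal in [R]. *)
Ltac rring := match goal with |- ?A = ?B => change (@eq R A B) end; cbv beta; ring.
Ltac rfield := match goal with |- ?A = ?B => change (@eq R A B) end; cbv beta; field.

Lemma is_derive_eq (f : R -> R) x l l' : is_derive f x l -> l = l' -> is_derive f x l'.
Proof. now intros H ->. Qed.

Lemma is_derive_Rplus (f g : R -> R) x df dg :
  is_derive f x df -> is_derive g x dg -> is_derive (fun y => f y + g y) x (df + dg).
Proof. intros Hf Hg. apply (is_derive_plus f g x df dg Hf Hg). Qed.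

Lemma is_derive_Rminus (f g : R -> R) x df dg :
  is_derive f x df -> is_derive g x dg -> is_derive (fun y => f y - g y) x (df - dg).
Proof. intros Hf Hg. apply (is_derive_minus f g x df dg Hf Hg). Qed.

Lemma is_derive_Rmult (f g : R -> R) x df dg :
  is_derive f x df -> is_derive g x dg ->
  is_derive (fun y => f y * g y) x (df * g x + f x * dg).
Proof. intros Hf Hg. apply (is_derive_mult f g x df dg Hf Hg), Rmult_comm. Qed.

Lemma is_derive_Rcomp (f g : R -> R) x df dg :
  is_derive f (g x) df -> is_derive g x dg -> is_derive (fun y => f (g y)) x (dg * df).
Proof. intros Hf Hg. apply (is_derive_comp f g x df dg Hf Hg). Qed.

Lemma is_derive_lin (k x : R) : is_derive (fun y => k * y) x k.
Proof. eapply is_derive_eq; [apply is_derive_scal, is_derive_id|]. apply Rmult_1_r. Qed.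

Lemma is_derive_cos_lin k y : is_derive (fun y => cos (k * y)) y (- k * sin (k * y)).
Proof.
  eapply is_derive_eq; [apply (is_derive_Rcomp cos); [apply is_derive_cos|apply is_derive_lin]|].
  rring.
Qed.

Lemma is_derive_sin_lin k y : is_derive (fun y => sin (k * y)) y (k * cos (k * y)).
Proof.
  eapply is_derive_eq; [apply (is_derive_Rcomp sin); [apply is_derive_sin|apply is_derive_lin]|].
  rring.
Qed.

Lemma is_derive_continuity_pt (f : R -> R) x l : is_derive f x l -> continuity_pt f x.
Proof.
  intros H. apply continuity_pt_filterlim.
  apply (ex_derive_continuous (K:=R_AbsRing) (V:=R_NormedModule) f x). now exists l.
Qed.

Lemma locally_open_interval (lo hi x : R) : lo < x < hi -> locally x (fun y => lo < y < hi).
Proof.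
  intros Hx.
  assert (Hp : 0 < Rmin (x - lo) (hi - x)) by (apply Rmin_pos; lra).
  exists (mkposreal _ Hp). intros y Hy.
  change (Rabs (y - x) < Rmin (x - lo) (hi - x)) in Hy. apply Rabs_def2 in Hy.
  pose proof (Rmin_l (x - lo) (hi - x)). pose proof (Rmin_r (x - lo) (hi - x)). lra.
Qed.

Lemma is_derive_ext_interval (lo hi : R) (f g : R -> R) x l :
  lo < x < hi -> (forall y, lo < y < hi -> f y = g y) ->
  is_derive f x l -> is_derive g x l.
Proof.
  intros Hx Hfg. apply is_derive_ext_loc.
  apply (filter_imp (fun y => lo < y < hi)); auto. now apply locally_open_interval.
Qed.

Lemma MVT_interval (lo hi : R) (f df : R -> R) x y :
  (forall z, lo < z < hi -> is_derive f z (df z)) -> lo < x < hi -> lo < y < hi ->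
  exists c, Rmin x y <= c <= Rmax x y /\ f y - f x = df c * (y - x).
Proof.
  intros Hd Hx Hy.
  assert (Hin : forall z, Rmin x y <= z <= Rmax x y -> lo < z < hi).
  { intros z Hz. split.
    - apply Rlt_le_trans with (Rmin x y); [apply Rmin_glb_lt|]; lra.
    - apply Rle_lt_trans with (Rmax x y); [|apply Rmax_lub_lt]; lra. }
  destruct (MVT_gen f x y df) as [c Hc].
  - intros z Hz. apply Hd, Hin. lra.
  - intros z Hz. apply (is_derive_continuity_pt _ _ (df z)), Hd, Hin, Hz.
  - now exists c.
Qed.

Lemma constant_on_interval (lo hi : R) (f : R -> R) x y :
  (forall z, lo < z < hi -> is_derive f z 0) -> lo < x < hi -> lo < y < hi -> f y = f x.
Proof.
  intros Hd Hx Hy. destruct (MVT_interval lo hi f (fun _ => 0) x y) as [c [_ Hc]]; auto. lra.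
Qed.

(* Conservation of [k Y^2 + Y'^2]. *)
Lemma harmonic_zero (lo hi k : R) (Y Y' : R -> R) :
  lo < 0 < hi -> 0 < k ->
  (forall y, lo < y < hi -> is_derive Y y (Y' y)) ->
  (forall y, lo < y < hi -> is_derive Y' y (- k * Y y)) ->
  Y 0 = 0 -> Y' 0 = 0 -> forall y, lo < y < hi -> Y y = 0.
Proof.
  intros H0 Hk HY HY' Y0 Y'0 y Hy.
  assert (C : k * (Y y * Y y) + Y' y * Y' y = k * (Y 0 * Y 0) + Y' 0 * Y' 0).
  { apply (constant_on_interval lo hi (fun x => k * (Y x * Y x) + Y' x * Y' x)); auto; try lra.
    intros x Hx. eapply is_derive_eq.
    - apply is_derive_Rplus; [apply is_derive_scal|]; apply is_derive_Rmult; auto.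
    - rring. }
  rewrite Y0, Y'0 in C.
  assert (Y y * Y y = 0) by nra. nra.
Qed.

(* Weighting by [exp (-K x)] on the right of [x0] and by [exp (K x)] on its left makes
   [phi] monotone away from [x0]. *)
Lemma gronwall_zero lo hi K (phi dphi : R -> R) x0 :
  0 <= K -> lo < x0 < hi ->
  (forall x, lo < x < hi -> is_derive phi x (dphi x)) ->
  (forall x, lo < x < hi -> 0 <= phi x) ->
  (forall x, lo < x < hi -> Rabs (dphi x) <= K * phi x) ->
  phi x0 = 0 -> forall x, lo < x < hi -> phi x = 0.
Proof.
  intros HK Hx0 Hd Hp Hb H0 x Hx.
  assert (Hw : forall c y, lo < y < hi -> is_derive (fun y => phi y * exp (c * y)) y
                 ((dphi y + c * phi y) * exp (c * y))).
  { intros c y Hy. eapply is_derive_eq.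
    - apply is_derive_Rmult; [now apply Hd|].
      apply (is_derive_Rcomp exp); [apply is_derive_exp|apply is_derive_lin].
    - rring. }
  assert (Hin : forall c, Rmin x0 x <= c <= Rmax x0 x -> lo < c < hi).
  { intros c Hc. unfold Rmin, Rmax in Hc. destruct Rle_dec; lra. }
  assert (Hneg : exists c, phi x * exp (c * x) <= 0).
  { destruct (Rle_dec x0 x).
    - exists (- K).
      destruct (MVT_interval lo hi _ _ x0 x (Hw (- K)) Hx0 Hx) as [c [Hc Hm]].
      rewrite H0, Rmult_0_l, Rminus_0_r in Hm. rewrite Hm.
      specialize (Hb c (Hin c Hc)). pose proof (Rle_abs (dphi c)). pose proof (exp_pos (- K * c)).
      apply Rmult_le_0_r; [apply Rmult_le_0_r|]; lra.
    - exists K.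
      destruct (MVT_interval lo hi _ _ x x0 (Hw K) Hx Hx0) as [c [Hc Hm]].
      rewrite H0, Rmult_0_l in Hm. rewrite Rmin_comm, Rmax_comm in Hc.
      specialize (Hb c (Hin c Hc)). pose proof (Rle_abs (- dphi c)). rewrite Rabs_Ropp in *.
      pose proof (exp_pos (K * c)).
      assert (0 <= (dphi c + K * phi c) * exp (K * c) * (x0 - x))
        by (apply Rmult_le_pos; [apply Rmult_le_pos|]; lra).
      lra. }
  destruct Hneg as [c Hc]. pose proof (exp_pos (c * x)). specialize (Hp x Hx). nra.
Qed.

Lemma exp_Lipschitz x y M :
  exp x <= M -> exp y <= M -> Rabs (exp x - exp y) <= M * Rabs (x - y).
Proof.
  intros Hx Hy. destruct (MVT_gen exp y x exp) as [c [Hc ->]].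
  - intros; apply is_derive_exp.
  - intros z _. apply (is_derive_continuity_pt _ _ _ (is_derive_exp z)).
  - rewrite Rabs_mult, (Rabs_pos_eq (exp c)) by (left; apply exp_pos).
    apply Rmult_le_compat_r; [apply Rabs_pos|].
    assert (Hc' : c <= y \/ c <= x) by (apply Rmax_Rle; lra).
    destruct Hc' as [[H | ->] | [H | ->]]; try apply exp_increasing in H; lra.
Qed.

Lemma sinh_Lipschitz x y M :
  exp x <= M -> exp y <= M -> exp (- x) <= M -> exp (- y) <= M ->
  Rabs (sinh x - sinh y) <= M * Rabs (x - y).
Proof.
  intros H1 H2 H3 H4. unfold sinh.
  assert (K1 := exp_Lipschitz x y M H1 H2). assert (K2 := exp_Lipschitz (- x) (- y) M H3 H4).
  replace (- x - - y) with (- (x - y)) in K2 by ring. rewrite Rabs_Ropp in K2.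
  replace ((exp x - exp (- x)) / 2 - (exp y - exp (- y)) / 2)
    with ((exp x - exp y) / 2 + (- (exp (- x) - exp (- y))) / 2) by field.
  eapply Rle_trans; [apply Rabs_triang|].
  unfold Rdiv. rewrite !Rabs_mult, Rabs_Ropp, (Rabs_pos_eq (/ 2)) by lra. lra.
Qed.

Definition is_coord (pr : V4 -> R) : Prop := pr = x1 \/ pr = x2 \/ pr = x3 \/ pr = x4.

Ltac coord_cases Hp := destruct Hp as [-> | [-> | [-> | ->]]].

Lemma coord_vadd pr w w' : is_coord pr -> pr (vadd w w') = pr w + pr w'.
Proof. intros Hp; coord_cases Hp; reflexivity. Qed.

Lemma coord_vscal pr k w : is_coord pr -> pr (vscal k w) = k * pr w.
Proof. intros Hp; coord_cases Hp; reflexivity. Qed.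

Lemma coord_vzero pr : is_coord pr -> pr vzero = 0.
Proof. intros Hp; coord_cases Hp; reflexivity. Qed.

Ltac coord_simpl Hp :=
  repeat first [rewrite coord_vadd by exact Hp | rewrite coord_vscal by exact Hp].

Definition det4 (a b c d : V4) : R :=
    x1 a * det3 (x2 b) (x3 b) (x4 b) (x2 c) (x3 c) (x4 c) (x2 d) (x3 d) (x4 d)
  - x2 a * det3 (x1 b) (x3 b) (x4 b) (x1 c) (x3 c) (x4 c) (x1 d) (x3 d) (x4 d)
  + x3 a * det3 (x1 b) (x2 b) (x4 b) (x1 c) (x2 c) (x4 c) (x1 d) (x2 d) (x4 d)
  - x4 a * det3 (x1 b) (x2 b) (x3 b) (x1 c) (x2 c) (x3 c) (x1 d) (x2 d) (x3 d).

Ltac vec_cbv := cbv [vadd vscal vzero dot det4 det3 e1 e2 e3 e4 mk4 x1 x2 x3 x4 fst snd].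

Lemma V4_ext (w w' : V4) :
  x1 w = x1 w' -> x2 w = x2 w' -> x3 w = x3 w' -> x4 w = x4 w' -> w = w'.
Proof.
  destruct w as [[[a1 a2] a3] a4], w' as [[[b1 b2] b3] b4].
  unfold x1, x2, x3, x4; simpl. now intros -> -> -> ->.
Qed.

Lemma V4_coord_ext (w w' : V4) : (forall pr, is_coord pr -> pr w = pr w') -> w = w'.
Proof. intros Hp. apply V4_ext; apply Hp; unfold is_coord; tauto. Qed.

Lemma dot_comm (x y : V4) : dot x y = dot y x.
Proof. unfold dot; ring. Qed.

Lemma dot_vadd_l (x y w : V4) : dot (vadd x y) w = dot x w + dot y w.
Proof. vec_cbv; ring. Qed.

Lemma dot_vscal_l (k : R) (x w : V4) : dot (vscal k x) w = k * dot x w.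
Proof. vec_cbv; ring. Qed.

Lemma det4_gram (a b c d : V4) :
  det4 a b c d * det4 a b c d =
  det4 (mk4 (dot a a) (dot a b) (dot a c) (dot a d))
       (mk4 (dot b a) (dot b b) (dot b c) (dot b d))
       (mk4 (dot c a) (dot c b) (dot c c) (dot c d))
       (mk4 (dot d a) (dot d b) (dot d c) (dot d d)).
Proof.
  destruct a as [[[a1 a2] a3] a4], b as [[[b1 b2] b3] b4],
           c as [[[c1 c2] c3] c4], d as [[[d1 d2] d3] d4].
  vec_cbv. ring.
Qed.

(* Cramer's rule: [det4 a b c d * x_i w] is [det4] with the i-th column replaced by the [dot w _]. *)
Lemma frame_orth_zero (a b c d w : V4) : det4 a b c d <> 0 ->
  dot w a = 0 -> dot w b = 0 -> dot w c = 0 -> dot w d = 0 -> w = vzero.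
Proof.
  intros Hd Ha Hb Hc Hdd.
  assert (Z : forall k, det4 a b c d * k = 0 -> k = 0).
  { intros k Hk. now destruct (Rmult_integral _ _ Hk). }
  assert (C1 : det4 a b c d * x1 w =
    det4 (mk4 (dot w a) (x2 a) (x3 a) (x4 a)) (mk4 (dot w b) (x2 b) (x3 b) (x4 b))
         (mk4 (dot w c) (x2 c) (x3 c) (x4 c)) (mk4 (dot w d) (x2 d) (x3 d) (x4 d)))
    by (vec_cbv; ring).
  assert (C2 : det4 a b c d * x2 w =
    det4 (mk4 (x1 a) (dot w a) (x3 a) (x4 a)) (mk4 (x1 b) (dot w b) (x3 b) (x4 b))
         (mk4 (x1 c) (dot w c) (x3 c) (x4 c)) (mk4 (x1 d) (dot w d) (x3 d) (x4 d)))
    by (vec_cbv; ring).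
  assert (C3 : det4 a b c d * x3 w =
    det4 (mk4 (x1 a) (x2 a) (dot w a) (x4 a)) (mk4 (x1 b) (x2 b) (dot w b) (x4 b))
         (mk4 (x1 c) (x2 c) (dot w c) (x4 c)) (mk4 (x1 d) (x2 d) (dot w d) (x4 d)))
    by (vec_cbv; ring).
  assert (C4 : det4 a b c d * x4 w =
    det4 (mk4 (x1 a) (x2 a) (x3 a) (dot w a)) (mk4 (x1 b) (x2 b) (x3 b) (dot w b))
         (mk4 (x1 c) (x2 c) (x3 c) (dot w c)) (mk4 (x1 d) (x2 d) (x3 d) (dot w d)))
    by (vec_cbv; ring).
  rewrite Ha, Hb, Hc, Hdd in C1, C2, C3, C4.
  apply V4_ext; apply Z; [rewrite C1|rewrite C2|rewrite C3|rewrite C4];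
    vec_cbv; ring.
Qed.

Lemma frame_eq (a b c d x y : V4) : det4 a b c d <> 0 ->
  dot x a = dot y a -> dot x b = dot y b -> dot x c = dot y c -> dot x d = dot y d -> x = y.
Proof.
  intros Hd Ha Hb Hc Hdd.
  assert (Hz : vadd x (vscal (-1) y) = vzero).
  { apply (frame_orth_zero a b c d); auto; rewrite dot_vadd_l, dot_vscal_l; lra. }
  apply V4_coord_ext. intros pr Hp. apply (f_equal pr) in Hz.
  rewrite coord_vadd, coord_vscal, coord_vzero in Hz by auto. lra.
Qed.

Definition is_derive_v (f : R -> V4) (x : R) (df : V4) : Prop :=
  forall pr, is_coord pr -> is_derive (fun y => pr (f y)) x (pr df).

Lemma is_derive_v_ex_derive_v f x df : is_derive_v f x df -> ex_derive_v f x.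
Proof. intros H. repeat split; eexists; apply H; unfold is_coord; tauto. Qed.

Lemma is_derive_v_Dv f x df : is_derive_v f x df -> Dv f x = df.
Proof. intros H. apply V4_ext; apply is_derive_unique, H; unfold is_coord; tauto. Qed.

Lemma is_derive_v_ext_interval (lo hi : R) (f g : R -> V4) x df :
  lo < x < hi -> (forall y, lo < y < hi -> f y = g y) -> is_derive_v f x df -> is_derive_v g x df.
Proof.
  intros Hx Hfg Hf pr Hp. apply (is_derive_ext_interval lo hi (fun y => pr (f y))); auto.
  intros y Hy. now rewrite Hfg.
Qed.

Lemma is_derive_dot (f g : R -> V4) x df dg :
  is_derive_v f x df -> is_derive_v g x dg ->
  is_derive (fun y => dot (f y) (g y)) x (dot df (g x) + dot (f x) dg).
Proof.
  intros Hf Hg. unfold dot.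
  assert (Hm : forall pr, is_coord pr ->
     is_derive (fun y => pr (f y) * pr (g y)) x (pr df * pr (g x) + pr (f x) * pr dg))
    by (intros pr Hp; apply is_derive_Rmult; auto).
  eapply is_derive_eq.
  - apply is_derive_Rplus; [apply is_derive_Rplus; [apply is_derive_Rplus|]|];
      apply Hm; unfold is_coord; tauto.
  - rring.
Qed.

(** * Smooth maps on a rectangle *)

Definition rect (a b u v : R) : Prop := -a < u < a /\ -b < v < b.

Section Smooth.
Variable D : R -> R -> Prop.

Lemma smooth_on_su f : smooth_on D f -> smooth_on D (su f).
Proof. intros H k. exact (proj1 (proj2 (H (S k)))). Qed.

Lemma smooth_on_sv f : smooth_on D f -> smooth_on D (sv f).
Proof. intros H k. exact (proj2 (proj2 (H (S k)))). Qed.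

Lemma smooth_on_ex_derive_u f u v : smooth_on D f -> D u v -> ex_derive (fun x => f x v) u.
Proof. intros H Hd. exact (proj1 (proj2 (proj1 (H 1%nat) u v Hd))). Qed.

Lemma smooth_on_ex_derive_v f u v : smooth_on D f -> D u v -> ex_derive (fun y => f u y) v.
Proof. intros H Hd. exact (proj2 (proj2 (proj1 (H 1%nat) u v Hd))). Qed.

Lemma smooth_on_continuity f u v : smooth_on D f -> D u v -> continuity_2d_pt f u v.
Proof. intros H Hd. exact (H 0%nat u v Hd). Qed.

Lemma smooth_on_v_pu L : smooth_on_v D L -> smooth_on_v D (pu L).
Proof. intros (H1 & H2 & H3 & H4). repeat split; now apply smooth_on_su. Qed.

Lemma smooth_on_v_pv L : smooth_on_v D L -> smooth_on_v D (pv L).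
Proof. intros (H1 & H2 & H3 & H4). repeat split; now apply smooth_on_sv. Qed.

Lemma smooth_on_v_is_derive_u L u v : smooth_on_v D L -> D u v ->
  is_derive_v (fun x => L x v) u (pu L u v).
Proof.
  intros (H1 & H2 & H3 & H4) Hd pr Hp.
  coord_cases Hp; apply Derive_correct.
  - exact (smooth_on_ex_derive_u _ u v H1 Hd).
  - exact (smooth_on_ex_derive_u _ u v H2 Hd).
  - exact (smooth_on_ex_derive_u _ u v H3 Hd).
  - exact (smooth_on_ex_derive_u _ u v H4 Hd).
Qed.

Lemma smooth_on_v_is_derive_v L u v : smooth_on_v D L -> D u v ->
  is_derive_v (fun y => L u y) v (pv L u v).
Proof.
  intros (H1 & H2 & H3 & H4) Hd pr Hp.
  coord_cases Hp; apply Derive_correct.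
  - exact (smooth_on_ex_derive_v _ u v H1 Hd).
  - exact (smooth_on_ex_derive_v _ u v H2 Hd).
  - exact (smooth_on_ex_derive_v _ u v H3 Hd).
  - exact (smooth_on_ex_derive_v _ u v H4 Hd).
Qed.

End Smooth.

Lemma rect_locally_2d a b u v : rect a b u v -> locally_2d (rect a b) u v.
Proof.
  intros [[H1 H2] [H3 H4]].
  assert (Hp : 0 < Rmin (Rmin (u + a) (a - u)) (Rmin (v + b) (b - v)))
    by (repeat apply Rmin_pos; lra).
  exists (mkposreal _ Hp). simpl. intros x y Hx Hy.
  pose proof (Rmin_l (Rmin (u + a) (a - u)) (Rmin (v + b) (b - v))).
  pose proof (Rmin_r (Rmin (u + a) (a - u)) (Rmin (v + b) (b - v))).
  pose proof (Rmin_l (u + a) (a - u)). pose proof (Rmin_r (u + a) (a - u)).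
  pose proof (Rmin_l (v + b) (b - v)). pose proof (Rmin_r (v + b) (b - v)).
  apply Rabs_def2 in Hx. apply Rabs_def2 in Hy. unfold rect. lra.
Qed.

Lemma smooth_on_Schwarz a b f u v : smooth_on (rect a b) f -> rect a b u v ->
  su (sv f) u v = sv (su f) u v.
Proof.
  intros H Hd. apply Schwarz.
  - destruct (rect_locally_2d a b u v Hd) as [d Hdl]. exists d. intros x y Hx Hy.
    specialize (Hdl x y Hx Hy). repeat split.
    + exact (smooth_on_ex_derive_u _ f x y H Hdl).
    + exact (smooth_on_ex_derive_v _ f x y H Hdl).
    + exact (smooth_on_ex_derive_u _ (sv f) x y (smooth_on_sv _ f H) Hdl).
    + exact (smooth_on_ex_derive_v _ (su f) x y (smooth_on_su _ f H) Hdl).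
  - exact (smooth_on_continuity _ _ u v (smooth_on_su _ _ (smooth_on_sv _ f H)) Hd).
  - exact (smooth_on_continuity _ _ u v (smooth_on_sv _ _ (smooth_on_su _ f H)) Hd).
Qed.

Lemma smooth_on_v_Schwarz a b L u v : smooth_on_v (rect a b) L -> rect a b u v ->
  pu (pv L) u v = pv (pu L) u v.
Proof.
  intros (H1 & H2 & H3 & H4) Hd. apply V4_ext.
  - exact (smooth_on_Schwarz a b _ u v H1 Hd).
  - exact (smooth_on_Schwarz a b _ u v H2 Hd).
  - exact (smooth_on_Schwarz a b _ u v H3 Hd).
  - exact (smooth_on_Schwarz a b _ u v H4 Hd).
Qed.

Lemma dot_pu_eq a b L M u v (c : R -> R) dc :
  smooth_on_v (rect a b) L -> smooth_on_v (rect a b) M -> rect a b u v ->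
  (forall x, -a < x < a -> dot (L x v) (M x v) = c x) -> is_derive c u dc ->
  dot (pu L u v) (M u v) + dot (L u v) (pu M u v) = dc.
Proof.
  intros HL HM Hd Hc Hdc.
  rewrite <- (is_derive_unique (fun x => dot (L x v) (M x v)) u _
                (is_derive_dot _ _ _ _ _ (smooth_on_v_is_derive_u _ L u v HL Hd)
                                         (smooth_on_v_is_derive_u _ M u v HM Hd))).
  apply is_derive_unique, (is_derive_ext_interval (-a) a c); [apply Hd| |exact Hdc].
  intros y Hy; symmetry; auto.
Qed.

Lemma dot_pv_eq a b L M u v (c : R -> R) dc :
  smooth_on_v (rect a b) L -> smooth_on_v (rect a b) M -> rect a b u v ->
  (forall y, -b < y < b -> dot (L u y) (M u y) = c y) -> is_derive c v dc ->
  dot (pv L u v) (M u v) + dot (L u v) (pv M u v) = dc.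
Proof.
  intros HL HM Hd Hc Hdc.
  rewrite <- (is_derive_unique (fun y => dot (L u y) (M u y)) v _
                (is_derive_dot _ _ _ _ _ (smooth_on_v_is_derive_v _ L u v HL Hd)
                                         (smooth_on_v_is_derive_v _ M u v HM Hd))).
  apply is_derive_unique, (is_derive_ext_interval (-b) b c); [apply Hd| |exact Hdc].
  intros y Hy; symmetry; auto.
Qed.

(** * The explicit solutions of [z'' + 4 sinh z = 0] *)

Definition qform (al w : R) : R := al ^ 2 * cos w ^ 2 + sin w ^ 2.
Definition dqform (al w : R) : R := 2 * (1 - al ^ 2) * sin w * cos w.

(* In the variable [w = h^-1 (u + u0)] the solution is [zeta al w], with [u]-derivative
   [dzeta al w]. *)
Definition zeta (al w : R) : R := ln (qform al w / al).
Definition dzeta (al w : R) : R := dqform al w / (sqrt al * sqrt (qform al w)).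

Section ExplicitSolution.
Variable al : R.
Hypothesis Hal : 1 <= al.

Lemma qform_bounds w : 1 <= qform al w <= al ^ 2.
Proof.
  unfold qform. pose proof (sin2_cos2 w) as K. unfold Rsqr in K.
  assert (0 <= cos w * cos w) by nra. assert (0 <= sin w * sin w) by nra.
  assert (1 <= al * al) by nra. simpl. split; nra.
Qed.

Lemma sqrt_qform_bounds w : 1 <= sqrt (qform al w) <= al.
Proof.
  destruct (qform_bounds w) as [B1 B2]. split.
  - rewrite <- sqrt_1. apply sqrt_le_1_alt. lra.
  - rewrite <- (sqrt_pow2 al) at 2 by lra. apply sqrt_le_1_alt. lra.
Qed.

Lemma is_derive_qform w : is_derive (qform al) w (dqform al w).
Proof.
  unfold qform, dqform. eapply is_derive_eq.
  - apply is_derive_Rplus; [apply is_derive_scal|].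
    + apply (is_derive_ext (fun w => cos w * cos w)); [intros; rring|].
      apply is_derive_Rmult; apply is_derive_cos.
    + apply (is_derive_ext (fun w => sin w * sin w)); [intros; rring|].
      apply is_derive_Rmult; apply is_derive_sin.
  - rring.
Qed.

Lemma is_derive_dqform w :
  is_derive (dqform al) w (2 * (1 - al ^ 2) * (cos w ^ 2 - sin w ^ 2)).
Proof.
  unfold dqform. eapply is_derive_eq.
  - apply (is_derive_ext (fun w => 2 * (1 - al ^ 2) * (sin w * cos w))); [intros; rring|].
    apply is_derive_scal, is_derive_Rmult; [apply is_derive_sin|apply is_derive_cos].
  - rring.
Qed.

Lemma qform_identity w :
  2 * qform al w * (2 * (1 - al ^ 2) * (cos w ^ 2 - sin w ^ 2)) - dqform al w ^ 2
  = -4 * (qform al w ^ 2 - al ^ 2).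
Proof.
  unfold qform, dqform. pose proof (sin2_cos2 w) as K. unfold Rsqr in K.
  apply Rminus_diag_uniq.
  transitivity (4 * al ^ 2 * (cos w * cos w + sin w * sin w - 1)
                  * (cos w * cos w + sin w * sin w + 1)); [ring|].
  rewrite (Rplus_comm (cos w * cos w)), K. ring.
Qed.

Lemma continuous_inv_sqrt_qform x : continuous (fun t => / sqrt (qform al t)) x.
Proof.
  apply (ex_derive_continuous (K:=R_AbsRing) (V:=R_NormedModule)).
  pose proof (qform_bounds x). eexists.
  apply (is_derive_inv (fun t => sqrt (qform al t))).
  - apply (is_derive_sqrt (qform al)); [apply is_derive_qform|lra].
  - pose proof (sqrt_qform_bounds x). lra.
Qed.

Lemma is_derive_h_fun x : is_derive (h_fun al) x (sqrt al / sqrt (qform al x)).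
Proof.
  unfold h_fun. eapply is_derive_eq.
  - apply is_derive_scal.
    apply (is_derive_RInt (fun t => / sqrt (qform al t))
             (RInt (fun t => / sqrt (qform al t)) 0) 0 x).
    + apply filter_forall. intros y. apply (RInt_correct (V:=R_CompleteNormedModule)).
      apply (ex_RInt_continuous (V:=R_CompleteNormedModule)).
      intros; apply continuous_inv_sqrt_qform.
    + apply continuous_inv_sqrt_qform.
  - unfold Rdiv. rring.
Qed.

Lemma h_fun_0 : h_fun al 0 = 0.
Proof. unfold h_fun. rewrite RInt_point. unfold zero; simpl. ring. Qed.

Lemma h_fun_slope_bounds x : sqrt al / al <= sqrt al / sqrt (qform al x) <= sqrt al.
Proof.
  destruct (sqrt_qform_bounds x) as [B1 B2].
  assert (Hs : 0 < sqrt al) by (apply sqrt_lt_R0; lra).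
  unfold Rdiv. split.
  - apply Rmult_le_compat_l, Rinv_le_contravar; lra.
  - rewrite <- (Rmult_1_r (sqrt al)) at 2. apply Rmult_le_compat_l; [lra|].
    rewrite <- Rinv_1. apply Rinv_le_contravar; lra.
Qed.

Lemma h_fun_slope x y : exists m, sqrt al / al <= m /\ h_fun al y - h_fun al x = m * (y - x).
Proof.
  destruct (MVT_gen (h_fun al) x y (fun w => sqrt al / sqrt (qform al w))) as [c [_ K]].
  - intros; apply is_derive_h_fun.
  - intros w _. exact (is_derive_continuity_pt _ _ _ (is_derive_h_fun w)).
  - exists (sqrt al / sqrt (qform al c)). split; [apply h_fun_slope_bounds|exact K].
Qed.

Lemma h_fun_increasing x y : x < y -> h_fun al x < h_fun al y.
Proof.
  intros Hxy. destruct (h_fun_slope x y) as [m [Hm K]].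
  assert (0 < sqrt al / al) by (apply Rdiv_lt_0_compat; [apply sqrt_lt_R0|]; lra). nra.
Qed.

Lemma h_fun_lt_iff x y : h_fun al x < h_fun al y <-> x < y.
Proof.
  split; [|apply h_fun_increasing].
  intros H. destruct (Rlt_le_dec x y) as [K | [K | ->]]; auto.
  - apply h_fun_increasing in K. lra.
  - lra.
Qed.

Lemma h_fun_inverse :
  {hinv : R -> R | (forall x, hinv (h_fun al x) = x) /\ (forall y, h_fun al (hinv y) = y)}.
Proof.
  assert (Hsa : 0 < sqrt al) by (apply sqrt_lt_R0; lra).
  assert (Hs : 0 < sqrt al / al) by (apply Rdiv_lt_0_compat; lra).
  assert (Hsurj : forall y, {x | h_fun al x = y}).
  { intros y. set (A := Rabs y / (sqrt al / al) + 1).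
    assert (HA : 0 < A) by (unfold A; pose proof (Rabs_pos y);
      assert (0 <= Rabs y / (sqrt al / al)) by (apply Rdiv_le_0_compat; lra); lra).
    assert (Hy : h_fun al (- A) <= y <= h_fun al A).
    { destruct (h_fun_slope 0 A) as [m1 [Hm1 K1]], (h_fun_slope 0 (- A)) as [m2 [Hm2 K2]].
      rewrite h_fun_0 in K1, K2.
      assert (HAy : sqrt al / al * A = Rabs y + sqrt al / al) by (unfold A; field; split; lra).
      assert (sqrt al / al * A <= m1 * A) by (apply Rmult_le_compat_r; lra).
      assert (sqrt al / al * A <= m2 * A) by (apply Rmult_le_compat_r; lra).
      pose proof (Rle_abs y). pose proof (Rle_abs (- y)). rewrite Rabs_Ropp in *. lra. }
    destruct (IVT_gen (h_fun al) (- A) A y) as [x [_ Hx]].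
    - intros x. exact (is_derive_continuity_pt _ _ _ (is_derive_h_fun x)).
    - rewrite Rmin_left, Rmax_right; lra.
    - now exists x. }
  exists (fun y => proj1_sig (Hsurj y)). split; [|intros y; exact (proj2_sig (Hsurj y))].
  intros x. destruct (Hsurj (h_fun al x)) as [x' Hx']; simpl.
  destruct (Rtotal_order x' x) as [K|[K|K]]; auto; apply h_fun_increasing in K; lra.
Qed.

Lemma is_derive_zeta w :
  is_derive (zeta al) w (sqrt al / sqrt (qform al w) * dzeta al w).
Proof.
  destruct (qform_bounds w) as [HG _]. pose proof (sqrt_qform_bounds w).
  assert (Hsa : 0 < sqrt al) by (apply sqrt_lt_R0; lra).
  unfold zeta. eapply is_derive_eq.
  - apply (is_derive_Rcomp ln (fun w => qform al w / al) w (/ (qform al w / al))).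
    + apply is_derive_ln, Rdiv_lt_0_compat; lra.
    + apply (is_derive_ext (fun w => / al * qform al w)); [intros; unfold Rdiv; rring|].
      apply is_derive_scal, is_derive_qform.
  - unfold dzeta.
    assert (E1 : qform al w = sqrt (qform al w) * sqrt (qform al w)) by (rewrite sqrt_sqrt; lra).
    match goal with |- ?A = ?B => change (@eq R A B) end.
    set (sg := sqrt (qform al w)) in *. rewrite E1. field. split; lra.
Qed.

Lemma is_derive_dzeta w :
  is_derive (dzeta al) w (sqrt al / sqrt (qform al w) * (-4 * sinh (zeta al w))).
Proof.
  destruct (qform_bounds w) as [HG _]. pose proof (sqrt_qform_bounds w).
  assert (Hsa : 0 < sqrt al) by (apply sqrt_lt_R0; lra).
  unfold dzeta. eapply is_derive_eq.
  - apply is_derive_div; [apply is_derive_dqform| |nra].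
    apply (is_derive_scal (fun w => sqrt (qform al w))).
    apply (is_derive_sqrt (qform al)); [apply is_derive_qform|lra].
  - unfold zeta, sinh. rewrite exp_Ropp, exp_ln by (apply Rdiv_lt_0_compat; lra).
    pose proof (qform_identity w) as P.
    set (Gp := 2 * (1 - al ^ 2) * (cos w ^ 2 - sin w ^ 2)) in *.
    set (g := dqform al w) in *. set (Gv := qform al w) in *.
    assert (E1 : Gv = sqrt Gv * sqrt Gv) by (rewrite sqrt_sqrt; lra).
    assert (E2 : al = sqrt al * sqrt al) by (rewrite sqrt_sqrt; lra).
    set (sg := sqrt Gv) in *. set (sa := sqrt al) in *.
    match goal with |- ?A = ?B => change (@eq R A B) end.
    apply Rminus_diag_uniq.
    transitivity ((2 * Gv * Gp - g ^ 2 + 4 * (Gv ^ 2 - al ^ 2)) / (2 * sa * sg ^ 3)).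
    + rewrite E1, E2. field. split; lra.
    + rewrite P. field. split; lra.
Qed.

Lemma explicit_energy w : (dzeta al w / 2) ^ 2 + 2 * cosh (zeta al w) = al + / al.
Proof.
  destruct (qform_bounds w) as [HG _].
  assert (Hd2 : dqform al w ^ 2 = 4 * (al ^ 2 - qform al w) * (qform al w - 1)).
  { assert (S : sin w ^ 2 = 1 - cos w ^ 2)
      by (pose proof (sin2_cos2 w) as K; unfold Rsqr in K; simpl; lra).
    transitivity (4 * (1 - al ^ 2) ^ 2 * sin w ^ 2 * cos w ^ 2); [unfold dqform; ring|].
    unfold qform. rewrite S. ring. }
  unfold dzeta, zeta, cosh. rewrite exp_Ropp, exp_ln by (apply Rdiv_lt_0_compat; lra).
  replace ((dqform al w / (sqrt al * sqrt (qform al w)) / 2) ^ 2)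
    with (dqform al w ^ 2 / (4 * (sqrt al * sqrt al) * (sqrt (qform al w) * sqrt (qform al w)))).
  - rewrite Hd2, !sqrt_sqrt by lra. field. lra.
  - assert (0 < sqrt al) by (apply sqrt_lt_R0; lra).
    assert (0 < sqrt (qform al w)) by (apply sqrt_lt_R0; lra). field. lra.
Qed.

Lemma zeta_opp w : zeta al (- w) = zeta al w.
Proof. unfold zeta, qform. now rewrite sin_neg, cos_neg, <- !Rsqr_pow2, <- Rsqr_neg. Qed.

Lemma dzeta_opp w : dzeta al (- w) = - dzeta al w.
Proof.
  unfold dzeta, dqform, qform. rewrite sin_neg, cos_neg, <- !Rsqr_pow2, <- Rsqr_neg.
  unfold Rdiv. ring.
Qed.

Lemma qform_surj g : 1 <= g <= al ^ 2 -> exists w, 0 <= w <= PI / 2 /\ qform al w = g.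
Proof.
  intros Hg.
  assert (Q0 : qform al 0 = al ^ 2) by (unfold qform; rewrite cos_0, sin_0; ring).
  assert (Q1 : qform al (PI / 2) = 1) by (unfold qform; rewrite cos_PI2, sin_PI2; ring).
  destruct (IVT_gen (qform al) 0 (PI / 2) g) as [w [Hw Hq]].
  - intros x. exact (is_derive_continuity_pt _ _ _ (is_derive_qform x)).
  - rewrite Q0, Q1, Rmin_right, Rmax_left; lra.
  - exists w. split; [|exact Hq]. rewrite Rmin_left, Rmax_right in Hw; pose proof PI_RGT_0; lra.
Qed.

Lemma dzeta_nonpos w : 0 <= w <= PI / 2 -> dzeta al w <= 0.
Proof.
  intros Hw. destruct (qform_bounds w) as [HG _].
  assert (0 <= sin w) by (apply sin_ge_0; pose proof PI_RGT_0; lra).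
  assert (0 <= cos w) by (apply cos_ge_0; pose proof PI_RGT_0; lra).
  assert (0 < sqrt al * sqrt (qform al w))
    by (apply Rmult_lt_0_compat; apply sqrt_lt_R0; lra).
  unfold dzeta, dqform, Rdiv. apply Rmult_le_0_r; [|left; now apply Rinv_0_lt_compat].
  assert (0 <= sin w * cos w) by nra. assert (1 - al ^ 2 <= 0) by nra.
  assert ((1 - al ^ 2) * (sin w * cos w) <= 0) by (apply Rmult_le_0_r; lra).
  replace (2 * (1 - al ^ 2) * sin w * cos w) with (2 * ((1 - al ^ 2) * (sin w * cos w))) by ring.
  lra.
Qed.

End ExplicitSolution.

Lemma alpha_of_energy B : 2 <= B -> exists al, 1 <= al /\ al + / al = B.
Proof.
  intros HB. set (sq := sqrt (B ^ 2 - 4)).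
  assert (Hsq : 0 <= sq) by apply sqrt_pos.
  assert (Hsq2 : sq * sq = B ^ 2 - 4) by (apply sqrt_sqrt; nra).
  exists ((B + sq) / 2). split; [lra|].
  replace (/ ((B + sq) / 2)) with ((B - sq) / 2); [field|].
  field_simplify_eq; [nra|lra].
Qed.

Lemma le_of_sum_inv_le m al : 1 <= m -> 1 <= al -> m + / m <= al + / al -> m <= al.
Proof.
  intros Hm Hal H. destruct (Rle_dec m al) as [|Hlt]; auto. exfalso.
  assert (K : (m - al) * (m * al - 1) = m * al * (m + / m - (al + / al))) by (field; lra).
  assert (0 < (m - al) * (m * al - 1)) by (apply Rmult_lt_0_compat; nra).
  assert (0 < m * al) by nra. nra.
Qed.

Lemma sum_inv_le_bounds x al : 0 < x -> 1 <= al -> x + / x <= al + / al -> 1 <= al * x <= al ^ 2.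
Proof.
  intros Hx Hal H. assert (Hix : 0 < / x) by now apply Rinv_0_lt_compat.
  destruct (Rle_dec 1 x) as [H1|H1].
  - pose proof (le_of_sum_inv_le x al H1 Hal H). split; nra.
  - assert (Hi1 : 1 <= / x) by (rewrite <- Rinv_1; apply Rinv_le_contravar; lra).
    assert (Hi : / x <= al) by (apply le_of_sum_inv_le; auto; rewrite Rinv_inv; lra).
    assert (1 <= al * x) by (replace 1 with (/ x * x) by (field; lra); nra).
    split; nra.
Qed.

Lemma exp_le_energy x y B : y ^ 2 + 2 * cosh x = B -> exp x <= B /\ exp (- x) <= B.
Proof.
  intros H. unfold cosh in H. pose proof (exp_pos x). pose proof (exp_pos (- x)).
  pose proof (pow2_ge_0 y). split; lra.
Qed.

Lemma explicit_initial_data s t : exists al w0,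
  1 <= al /\ al + / al = t ^ 2 + 2 * cosh s /\ zeta al w0 = s /\ dzeta al w0 = 2 * t.
Proof.
  set (B := t ^ 2 + 2 * cosh s).
  assert (Hx := exp_pos s). set (x := exp s) in *.
  assert (HxB : x + / x <= B)
    by (unfold B, cosh; rewrite exp_Ropp; fold x; pose proof (pow2_ge_0 t); lra).
  assert (HB : 2 <= B).
  { assert (0 <= (x - 1) ^ 2 / x) by (apply Rdiv_le_0_compat; [apply pow2_ge_0|lra]).
    replace ((x - 1) ^ 2 / x) with (x + / x - 2) in * by (field; lra). lra. }
  destruct (alpha_of_energy B HB) as [al [Hal Hsum]]. exists al.
  destruct (qform_surj al (al * x)) as [w1 [Hw1 Hq]].
  { apply sum_inv_le_bounds; auto. lra. }
  assert (Hz : zeta al w1 = s)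
    by (unfold zeta; rewrite Hq; replace (al * x / al) with x by (field; lra); apply ln_exp).
  assert (Hd2 : (dzeta al w1 / 2) ^ 2 = t ^ 2).
  { pose proof (explicit_energy al Hal w1) as K. rewrite Hz, Hsum in K. unfold B in K. lra. }
  pose proof (dzeta_nonpos al Hal w1 Hw1) as Hneg.
  assert (Habs : dzeta al w1 = - 2 * Rabs t).
  { pose proof (Rabs_pos t). pose proof (pow2_abs t).
    assert (Hsq : (dzeta al w1 / 2) ^ 2 = Rabs t ^ 2) by congruence. nra. }
  destruct (Rle_dec t 0).
  - exists w1. rewrite Habs, Rabs_left1 by lra. repeat split; auto; ring.
  - exists (- w1). rewrite zeta_opp, dzeta_opp, Habs, Rabs_right by lra.
    repeat split; auto; ring.
Qed.

(** * Solutions of [z' = 2 c], [c' = -2 sinh z] *)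

Lemma comparison_bound (hw H K d e sd : R) :
  0 <= hw <= H -> 0 <= K -> Rabs sd <= K * Rabs d ->
  Rabs (hw * (2 * d * e - 8 * e * sd)) <= H * (1 + 4 * K) * (d * d + e * e).
Proof.
  intros Hh HK Hs. rewrite Rabs_mult, (Rabs_pos_eq hw) by lra.
  assert (Hde : 2 * Rabs d * Rabs e <= d * d + e * e).
  { assert (Rabs d * Rabs d = d * d) by (rewrite <- Rabs_mult; apply Rabs_pos_eq; nra).
    assert (Rabs e * Rabs e = e * e) by (rewrite <- Rabs_mult; apply Rabs_pos_eq; nra).
    pose proof (pow2_ge_0 (Rabs d - Rabs e)). nra. }
  assert (Hin : Rabs (2 * d * e - 8 * e * sd) <= (1 + 4 * K) * (d * d + e * e)).
  { unfold Rminus. eapply Rle_trans; [apply Rabs_triang|].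
    rewrite Rabs_Ropp, !Rabs_mult, (Rabs_pos_eq 2), (Rabs_pos_eq 8) by lra.
    pose proof (Rabs_pos e). pose proof (Rabs_pos d).
    assert (Rabs e * Rabs sd <= Rabs e * (K * Rabs d)) by (apply Rmult_le_compat_l; lra).
    nra. }
  pose proof (Rabs_pos (2 * d * e - 8 * e * sd)).
  apply Rle_trans with (H * Rabs (2 * d * e - 8 * e * sd)); [apply Rmult_le_compat_r; lra|].
  replace (H * (1 + 4 * K) * (d * d + e * e)) with (H * ((1 + 4 * K) * (d * d + e * e))) by ring.
  apply Rmult_le_compat_l; lra.
Qed.

Section SinhOde.
Variables (a : R) (z c : R -> R).
Hypothesis Ha : 0 < a.
Hypothesis Hz : forall u, -a < u < a -> is_derive z u (2 * c u).
Hypothesis Hc : forall u, -a < u < a -> is_derive c u (-2 * sinh (z u)).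

Lemma sinh_ode_energy u : -a < u < a ->
  c u ^ 2 + 2 * cosh (z u) = c 0 ^ 2 + 2 * cosh (z 0).
Proof.
  intros Hu.
  apply (constant_on_interval (-a) a (fun x => c x ^ 2 + 2 * cosh (z x))); auto; [|lra].
  intros x Hx. eapply is_derive_eq.
  - apply is_derive_Rplus.
    + apply (is_derive_ext (fun x => c x * c x)); [intros; rring|].
      apply is_derive_Rmult; now apply Hc.
    + apply is_derive_scal, (is_derive_Rcomp cosh); [|now apply Hz].
      apply is_derive_Reals, derivable_pt_lim_cosh.
  - rring.
Qed.

Lemma sinh_ode_second_derivative u : -a < u < a ->
  Derive (Derive z) u + 4 * sinh (z u) = 0.
Proof.
  intros Hu.
  assert (K : is_derive (Derive z) u (2 * (-2 * sinh (z u)))).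
  { apply (is_derive_ext_interval (-a) a (fun x => 2 * c x)); auto.
    - intros y Hy. symmetry. now apply is_derive_unique, Hz.
    - now apply is_derive_scal, Hc. }
  rewrite (is_derive_unique _ _ _ K). ring.
Qed.

(* Comparison with the explicit solution in the variable [w]: the squared distance
   [phi] of the two phase points satisfies [|phi'| <= K phi], hence vanishes. *)
Lemma sinh_ode_explicit_unique al w0 (hinv : R -> R) :
  1 <= al -> al + / al = c 0 ^ 2 + 2 * cosh (z 0) ->
  (forall y, h_fun al (hinv y) = y) ->
  zeta al w0 = z 0 -> dzeta al w0 = 2 * c 0 ->
  forall u, -a < u < a -> z u = zeta al (hinv (u + h_fun al w0)).
Proof.
  intros Hal HB Hh Hz0 Hc0 u Hu.
  set (B := c 0 ^ 2 + 2 * cosh (z 0)) in *. set (u0 := h_fun al w0).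
  set (wl := hinv (u0 - a)). set (wr := hinv (u0 + a)).
  assert (Hin : forall w, wl < w < wr <-> -a < h_fun al w - u0 < a).
  { intros w. rewrite <- (h_fun_lt_iff al Hal wl w), <- (h_fun_lt_iff al Hal w wr).
    unfold wl, wr. rewrite !Hh. lra. }
  set (hp := fun w => sqrt al / sqrt (qform al w)).
  set (d := fun w => z (h_fun al w - u0) - zeta al w).
  set (e := fun w => 2 * c (h_fun al w - u0) - dzeta al w).
  set (sd := fun w => sinh (z (h_fun al w - u0)) - sinh (zeta al w)).
  set (phi := fun w => d w * d w + e w * e w).
  assert (Hh' : forall w, is_derive (fun w => h_fun al w - u0) w (hp w)).
  { intros w. eapply is_derive_eq; [apply is_derive_Rminus;
      [apply (is_derive_h_fun al Hal)|apply is_derive_const]|]. unfold hp, zero; simpl; ring. }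
  assert (Hd : forall w, wl < w < wr -> is_derive d w (hp w * e w)).
  { intros w Hw. apply Hin in Hw. eapply is_derive_eq.
    - apply is_derive_Rminus; [|apply (is_derive_zeta al Hal)].
      apply (is_derive_Rcomp z); [now apply Hz|apply Hh'].
    - unfold e, hp. rring. }
  assert (He : forall w, wl < w < wr -> is_derive e w (hp w * (-4 * sd w))).
  { intros w Hw. apply Hin in Hw. eapply is_derive_eq.
    - apply is_derive_Rminus; [|apply (is_derive_dzeta al Hal)].
      apply is_derive_scal, (is_derive_Rcomp c); [now apply Hc|apply Hh'].
    - unfold sd, hp. rring. }
  assert (HB0 : 0 <= B) by (unfold B, cosh; pose proof (pow2_ge_0 (c 0));
    pose proof (exp_pos (z 0)); pose proof (exp_pos (- z 0)); lra).
  assert (Hbound : forall w, wl < w < wr ->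
            Rabs (hp w * (2 * d w * e w - 8 * e w * sd w)) <= sqrt al * (1 + 4 * B) * phi w).
  { intros w Hw. apply Hin in Hw.
    destruct (exp_le_energy (z (h_fun al w - u0)) (c (h_fun al w - u0)) B) as [Hz1 Hz2].
    { now rewrite sinh_ode_energy. }
    destruct (exp_le_energy (zeta al w) (dzeta al w / 2) B) as [Hw1 Hw2].
    { now rewrite (explicit_energy al Hal). }
    pose proof (h_fun_slope_bounds al Hal w).
    assert (0 <= sqrt al / al) by (apply Rdiv_le_0_compat; [apply sqrt_pos|lra]).
    apply comparison_bound; [unfold hp; lra|lra|now apply sinh_Lipschitz]. }
  assert (Hw0 : wl < w0 < wr) by (apply Hin; unfold u0; lra).
  set (w := hinv (u + u0)).
  assert (Hwu : h_fun al w - u0 = u) by (unfold w; rewrite Hh; ring).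
  assert (Hw : wl < w < wr) by (apply Hin; lra).
  assert (K : phi w = 0).
  { apply (gronwall_zero wl wr (sqrt al * (1 + 4 * B)) phi
             (fun w => hp w * (2 * d w * e w - 8 * e w * sd w)) w0); auto.
    - apply Rmult_le_pos; [apply sqrt_pos|lra].
    - intros x Hx. unfold phi. eapply is_derive_eq;
        [apply is_derive_Rplus; apply is_derive_Rmult; auto|rring].
    - intros x _. unfold phi. nra.
    - unfold phi, d, e, u0. rewrite Hz0, Hc0, !Rminus_diag. ring. }
  assert (Kd : d w = 0) by (unfold phi in K; nra).
  unfold d in Kd. rewrite Hwu in Kd. lra.
Qed.

Lemma sinh_ode_explicit : exists al u0 : R, 0 < al /\
  exists hinv : R -> R,
    (forall x, hinv (h_fun al x) = x) /\ (forall y, h_fun al (hinv y) = y) /\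
    (forall u, -a < u < a ->
       z u = ln ((al ^ 2 * cos (hinv (u + u0)) ^ 2 + sin (hinv (u + u0)) ^ 2) / al)).
Proof.
  destruct (explicit_initial_data (z 0) (c 0)) as (al & w0 & Hal & HB & Hz0 & Hc0).
  destruct (h_fun_inverse al Hal) as [hinv [Hl Hr]].
  exists al, (h_fun al w0). split; [lra|]. exists hinv. repeat split; auto.
  exact (sinh_ode_explicit_unique al w0 hinv Hal HB Hr Hz0 Hc0).
Qed.

End SinhOde.

(** * The moving frame of the surface *)

Definition christoffel (E : R -> R) (u : R) : R := Derive E u / (2 * E u).

(* [beta ^ 2], [1 / |l_u|] and the circles traced by the [v]-lines, for [s = ln E(0)],
   [t = christoffel E 0]. *)
Definition beta2 (E : R -> R) : R := christoffel E 0 ^ 2 + 2 * cosh (ln (E 0)).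
Definition inv_speed (E : R -> R) (u : R) : R := exp (- ln (E u) / 2).

Definition circle_axis (s t : R) : V4 :=
  vadd (vadd (vscal (exp (s / 2)) e1) (vscal t e2)) (vscal (exp (- s / 2)) e4).
Definition circle_pos (s t beta y : R) : V4 :=
  vscal (/ beta ^ 2)
    (vadd (vscal (cos (beta * y)) (circle_axis s t)) (vscal (beta * sin (beta * y)) e3)).
Definition circle_vel (s t beta y : R) : V4 :=
  vadd (vscal (- sin (beta * y) / beta) (circle_axis s t)) (vscal (cos (beta * y)) e3).

Lemma exp_half_ln x : 0 < x -> exp (ln x / 2) = sqrt x.
Proof.
  intros Hx. rewrite <- (sqrt_square (exp (ln x / 2))) by (left; apply exp_pos).
  f_equal. rewrite <- exp_plus. replace (ln x / 2 + ln x / 2) with (ln x) by field.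
  now apply exp_ln.
Qed.

Lemma exp_neg_half_ln x : 0 < x -> exp (- ln x / 2) = / sqrt x.
Proof.
  intros Hx. replace (- ln x / 2) with (- (ln x / 2)) by field.
  now rewrite exp_Ropp, exp_half_ln.
Qed.

Lemma two_cosh_ln x : 0 < x -> 2 * cosh (ln x) = x + / x.
Proof. intros Hx. unfold cosh. rewrite exp_Ropp, exp_ln by lra. field. lra. Qed.

Section Circle.
Variables s t beta : R.
Hypothesis Hbeta : beta <> 0.

Lemma is_derive_circle_pos y : is_derive_v (circle_pos s t beta) y (circle_vel s t beta y).
Proof.
  intros pr Hp. unfold circle_pos, circle_vel. rewrite !coord_vadd, !coord_vscal by auto.
  apply (is_derive_ext (fun y => / beta ^ 2 * (cos (beta * y) * pr (circle_axis s t)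
                                  + beta * (sin (beta * y) * pr e3)))).
  { intros y'. rewrite !coord_vscal, coord_vadd, !coord_vscal by auto. rring. }
  eapply is_derive_eq.
  - apply is_derive_scal, is_derive_Rplus.
    + apply (is_derive_Rmult (fun y => cos (beta * y)) (fun _ => pr (circle_axis s t)));
        [apply is_derive_cos_lin|apply is_derive_const].
    + apply is_derive_scal, (is_derive_Rmult (fun y => sin (beta * y)) (fun _ => pr e3));
        [apply is_derive_sin_lin|apply is_derive_const].
  - unfold zero; simpl. field. auto.
Qed.

Lemma is_derive_circle_vel y :
  is_derive_v (circle_vel s t beta) y (vscal (- beta ^ 2) (circle_pos s t beta y)).
Proof.
  intros pr Hp. unfold circle_pos, circle_vel. rewrite !coord_vscal, coord_vadd, !coord_vscal by auto.
  apply (is_derive_ext (fun y => (- / beta) * (sin (beta * y) * pr (circle_axis s t))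
                                  + cos (beta * y) * pr e3)).
  { intros y'. rewrite coord_vadd, !coord_vscal by auto. unfold Rdiv. rring. }
  eapply is_derive_eq.
  - apply is_derive_Rplus.
    + apply is_derive_scal, (is_derive_Rmult (fun y => sin (beta * y)) (fun _ => pr (circle_axis s t)));
        [apply is_derive_sin_lin|apply is_derive_const].
    + apply (is_derive_Rmult (fun y => cos (beta * y)) (fun _ => pr e3));
        [apply is_derive_cos_lin|apply is_derive_const].
  - unfold zero; simpl. field. auto.
Qed.

End Circle.

Lemma circle_pos_0 s t beta : circle_pos s t beta 0 = vscal (/ beta ^ 2) (circle_axis s t).
Proof.
  unfold circle_pos. rewrite Rmult_0_r, cos_0, sin_0, Rmult_0_r.
  apply V4_ext; vec_cbv; ring.
Qed.

Lemma circle_vel_0 s t beta : circle_vel s t beta 0 = e3.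
Proof.
  unfold circle_vel. rewrite Rmult_0_r, cos_0, sin_0.
  apply V4_ext; vec_cbv; unfold Rdiv; ring.
Qed.

Section Surface.
Variables (a b : R) (l n : R -> R -> V4) (E : R -> R).
Hypothesis Ha : 0 < a.
Hypothesis Hb : 0 < b.
Hypothesis Hl : smooth_on_v (rect a b) l.
Hypothesis Hn : smooth_on_v (rect a b) n.
Hypothesis HE : forall u, -a < u < a -> 0 < E u.
Hypothesis Hframe : forall u v, rect a b u v ->
  dot (l u v) (l u v) = 1 /\
  dot (pu l u v) (pu l u v) = E u /\
  dot (pv l u v) (pv l u v) = E u /\
  dot (pu l u v) (pv l u v) = 0 /\
  dot (n u v) (n u v) = 1 /\
  dot (n u v) (l u v) = 0 /\
  dot (n u v) (pu l u v) = 0 /\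
  dot (n u v) (pv l u v) = 0 /\
  dot (pu (pu l) u v) (n u v) = 1 /\
  dot (pv (pu l) u v) (n u v) = 0 /\
  dot (pv (pv l) u v) (n u v) = -1.

Ltac frame u v Huv :=
  destruct (Hframe u v Huv) as
    (F_ll & F_lulu & F_lvlv & F_lulv & F_nn & F_nl & F_nlu & F_nlv & F_luun & F_luvn & F_lvvn).

Ltac smooth := match goal with
  | |- smooth_on_v _ (pu _) => apply smooth_on_v_pu; smooth
  | |- smooth_on_v _ (pv _) => apply smooth_on_v_pv; smooth
  | |- _ => first [exact Hl | exact Hn]
  end.

Lemma rect_u u : -a < u < a -> rect a b u 0.
Proof. split; [auto|lra]. Qed.

Lemma rect_v v : -b < v < b -> rect a b 0 v.
Proof. split; [lra|auto]. Qed.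

Lemma dot_lu_l u v : rect a b u v -> dot (pu l u v) (l u v) = 0.
Proof.
  intros Huv. assert (K := dot_pu_eq a b l l u v (fun _ => 1) 0 Hl Hl Huv
    ltac:(intros x Hx; now frame x v (conj Hx (proj2 Huv))) (is_derive_const 1 u)).
  rewrite (dot_comm (l u v)) in K. lra.
Qed.

Lemma dot_lv_l u v : rect a b u v -> dot (pv l u v) (l u v) = 0.
Proof.
  intros Huv. assert (K := dot_pv_eq a b l l u v (fun _ => 1) 0 Hl Hl Huv
    ltac:(intros y Hy; now frame u y (conj (proj1 Huv) Hy)) (is_derive_const 1 v)).
  rewrite (dot_comm (l u v)) in K. lra.
Qed.

Lemma dot_luu_l u v : rect a b u v -> dot (pu (pu l) u v) (l u v) = - E u.
Proof.
  intros Huv. assert (K := dot_pu_eq a b (pu l) l u v (fun _ => 0) 0 ltac:(smooth) Hl Huv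
    ltac:(intros x Hx; exact (dot_lu_l x v (conj Hx (proj2 Huv)))) (is_derive_const 0 u)).
  frame u v Huv. lra.
Qed.

Lemma dot_luv_l u v : rect a b u v -> dot (pv (pu l) u v) (l u v) = 0.
Proof.
  intros Huv. assert (K := dot_pv_eq a b (pu l) l u v (fun _ => 0) 0 ltac:(smooth) Hl Huv
    ltac:(intros y Hy; exact (dot_lu_l u y (conj (proj1 Huv) Hy))) (is_derive_const 0 v)).
  frame u v Huv. lra.
Qed.

Lemma dot_lvv_l u v : rect a b u v -> dot (pv (pv l) u v) (l u v) = - E u.
Proof.
  intros Huv. assert (K := dot_pv_eq a b (pv l) l u v (fun _ => 0) 0 ltac:(smooth) Hl Huv
    ltac:(intros y Hy; exact (dot_lv_l u y (conj (proj1 Huv) Hy))) (is_derive_const 0 v)).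
  frame u v Huv. lra.
Qed.

Lemma is_derive_E u v : rect a b u v -> is_derive E u (2 * dot (pu (pu l) u v) (pu l u v)).
Proof.
  intros Huv. apply (is_derive_ext_interval (-a) a (fun x => dot (pu l x v) (pu l x v)));
    [apply Huv| |].
  - intros x Hx. now frame x v (conj Hx (proj2 Huv)).
  - eapply is_derive_eq; [apply is_derive_dot; apply (smooth_on_v_is_derive_u (rect a b)); auto; smooth|].
    rewrite (dot_comm (pu l u v)). rring.
Qed.

Lemma Derive_E u v : rect a b u v -> Derive E u = 2 * dot (pu (pu l) u v) (pu l u v).
Proof. intros Huv. exact (is_derive_unique _ _ _ (is_derive_E u v Huv)). Qed.

Lemma is_derive_E_Derive u : -a < u < a -> is_derive E u (Derive E u).
Proof. intros Hu. apply Derive_correct. eexists. exact (is_derive_E u 0 (rect_u u Hu)). Qed.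

Lemma dot_luu_lu u v : rect a b u v -> dot (pu (pu l) u v) (pu l u v) = Derive E u / 2.
Proof. intros Huv. rewrite (Derive_E u v Huv). field. Qed.

Lemma dot_luv_lu u v : rect a b u v -> dot (pv (pu l) u v) (pu l u v) = 0.
Proof.
  intros Huv. assert (K := dot_pv_eq a b (pu l) (pu l) u v (fun _ => E u) 0 ltac:(smooth)
    ltac:(smooth) Huv ltac:(intros y Hy; now frame u y (conj (proj1 Huv) Hy))
    (is_derive_const (E u) v)).
  rewrite (dot_comm (pu l u v)) in K. lra.
Qed.

Lemma dot_luv_lv u v : rect a b u v -> dot (pv (pu l) u v) (pv l u v) = Derive E u / 2.
Proof.
  intros Huv. assert (K := dot_pu_eq a b (pv l) (pv l) u v E (Derive E u) ltac:(smooth)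
    ltac:(smooth) Huv ltac:(intros x Hx; now frame x v (conj Hx (proj2 Huv)))
    (is_derive_E_Derive u (proj1 Huv))).
  rewrite (smooth_on_v_Schwarz a b l u v Hl Huv), (dot_comm (pv l u v)) in K. lra.
Qed.

Lemma dot_lvv_lv u v : rect a b u v -> dot (pv (pv l) u v) (pv l u v) = 0.
Proof.
  intros Huv. assert (K := dot_pv_eq a b (pv l) (pv l) u v (fun _ => E u) 0 ltac:(smooth)
    ltac:(smooth) Huv ltac:(intros y Hy; now frame u y (conj (proj1 Huv) Hy))
    (is_derive_const (E u) v)).
  rewrite (dot_comm (pv l u v)) in K. lra.
Qed.

Lemma dot_luu_lv u v : rect a b u v -> dot (pu (pu l) u v) (pv l u v) = 0.
Proof.
  intros Huv. assert (K := dot_pu_eq a b (pu l) (pv l) u v (fun _ => 0) 0 ltac:(smooth)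
    ltac:(smooth) Huv ltac:(intros x Hx; now frame x v (conj Hx (proj2 Huv)))
    (is_derive_const 0 u)).
  rewrite (smooth_on_v_Schwarz a b l u v Hl Huv), (dot_comm (pu l u v)),
    (dot_luv_lu u v Huv) in K. lra.
Qed.

Lemma dot_lvv_lu u v : rect a b u v -> dot (pv (pv l) u v) (pu l u v) = - (Derive E u / 2).
Proof.
  intros Huv. assert (K := dot_pv_eq a b (pu l) (pv l) u v (fun _ => 0) 0 ltac:(smooth)
    ltac:(smooth) Huv ltac:(intros y Hy; now frame u y (conj (proj1 Huv) Hy))
    (is_derive_const 0 v)).
  rewrite (dot_luv_lv u v Huv), (dot_comm (pu l u v)) in K. lra.
Qed.

Lemma dot_nv_l u v : rect a b u v -> dot (pv n u v) (l u v) = 0.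
Proof.
  intros Huv. assert (K := dot_pv_eq a b n l u v (fun _ => 0) 0 Hn Hl Huv
    ltac:(intros y Hy; now frame u y (conj (proj1 Huv) Hy)) (is_derive_const 0 v)).
  frame u v Huv. lra.
Qed.

Lemma dot_nv_lu u v : rect a b u v -> dot (pv n u v) (pu l u v) = 0.
Proof.
  intros Huv. assert (K := dot_pv_eq a b n (pu l) u v (fun _ => 0) 0 Hn ltac:(smooth) Huv
    ltac:(intros y Hy; now frame u y (conj (proj1 Huv) Hy)) (is_derive_const 0 v)).
  frame u v Huv. rewrite (dot_comm (n u v)) in K. lra.
Qed.

Lemma dot_nv_lv u v : rect a b u v -> dot (pv n u v) (pv l u v) = 1.
Proof.
  intros Huv. assert (K := dot_pv_eq a b n (pv l) u v (fun _ => 0) 0 Hn ltac:(smooth) Huv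
    ltac:(intros y Hy; now frame u y (conj (proj1 Huv) Hy)) (is_derive_const 0 v)).
  frame u v Huv. rewrite (dot_comm (n u v)) in K. lra.
Qed.

Lemma dot_nv_n u v : rect a b u v -> dot (pv n u v) (n u v) = 0.
Proof.
  intros Huv. assert (K := dot_pv_eq a b n n u v (fun _ => 1) 0 Hn Hn Huv
    ltac:(intros y Hy; now frame u y (conj (proj1 Huv) Hy)) (is_derive_const 1 v)).
  rewrite (dot_comm (n u v)) in K. lra.
Qed.

Lemma frame_det_neq0 u v : rect a b u v -> det4 (l u v) (pu l u v) (pv l u v) (n u v) <> 0.
Proof.
  intros Huv Hz. assert (K := det4_gram (l u v) (pu l u v) (pv l u v) (n u v)).
  rewrite Hz, (dot_comm (l u v) (pu l u v)), (dot_comm (l u v) (pv l u v)),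
    (dot_comm (l u v) (n u v)), (dot_comm (pu l u v) (n u v)), (dot_comm (pv l u v) (n u v)),
    (dot_comm (pv l u v) (pu l u v)), (dot_lu_l u v Huv), (dot_lv_l u v Huv) in K.
  frame u v Huv. rewrite F_ll, F_lulu, F_lvlv, F_lulv, F_nn, F_nl, F_nlu, F_nlv in K.
  revert K. vec_cbv. intros K.
  pose proof (HE u (proj1 Huv)). nra.
Qed.

(* Decompose both sides in the frame [(l, l_u, l_v, n)]. *)
Ltac frame_coeffs u v Huv :=
  apply (frame_eq (l u v) (pu l u v) (pv l u v) (n u v)); [exact (frame_det_neq0 u v Huv)| | | |];
  rewrite ?dot_vadd_l, ?dot_vscal_l,
    ?(dot_comm (l u v) (pu l u v)), ?(dot_comm (l u v) (pv l u v)), ?(dot_comm (l u v) (n u v)),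
    ?(dot_comm (pu l u v) (n u v)), ?(dot_comm (pv l u v) (n u v)),
    ?(dot_comm (pv l u v) (pu l u v));
  let F := fresh "F" in pose proof (Hframe u v Huv) as F;
  repeat match goal with
    | F : _ /\ _ |- _ => let G := fresh "G" in destruct F as [G F]; try rewrite G
    end;
  try rewrite F;
  rewrite ?(dot_lu_l u v Huv), ?(dot_lv_l u v Huv), ?(dot_luu_l u v Huv), ?(dot_luv_l u v Huv),
    ?(dot_lvv_l u v Huv), ?(dot_luu_lu u v Huv), ?(dot_luv_lu u v Huv), ?(dot_luv_lv u v Huv),
    ?(dot_lvv_lv u v Huv), ?(dot_luu_lv u v Huv), ?(dot_lvv_lu u v Huv), ?(dot_nv_l u v Huv),
    ?(dot_nv_lu u v Huv), ?(dot_nv_lv u v Huv), ?(dot_nv_n u v Huv);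
  unfold christoffel; pose proof (HE u (proj1 Huv)); field; lra.

Lemma gauss_luu u v : rect a b u v ->
  pu (pu l) u v = vadd (vadd (vscal (christoffel E u) (pu l u v)) (vscal (- E u) (l u v))) (n u v).
Proof. intros Huv. frame_coeffs u v Huv. Qed.

Lemma gauss_luv u v : rect a b u v -> pv (pu l) u v = vscal (christoffel E u) (pv l u v).
Proof. intros Huv. frame_coeffs u v Huv. Qed.

Lemma gauss_lvv u v : rect a b u v ->
  pv (pv l) u v =
  vadd (vadd (vscal (- christoffel E u) (pu l u v)) (vscal (- E u) (l u v))) (vscal (-1) (n u v)).
Proof. intros Huv. frame_coeffs u v Huv. Qed.

Lemma weingarten_nv u v : rect a b u v -> pv n u v = vscal (/ E u) (pv l u v).
Proof. intros Huv. frame_coeffs u v Huv. Qed.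

Lemma is_derive_Derive_E u : -a < u < a -> is_derive (Derive E) u (Derive (Derive E) u).
Proof.
  intros Hu. apply Derive_correct. eexists.
  apply (is_derive_ext_interval (-a) a (fun x => 2 * dot (pu (pu l) x 0) (pu l x 0))); [exact Hu| |].
  - intros y Hy. symmetry. exact (Derive_E y 0 (rect_u y Hy)).
  - apply is_derive_scal, is_derive_dot; apply (smooth_on_v_is_derive_u (rect a b));
      [smooth|exact (rect_u u Hu)|smooth|exact (rect_u u Hu)].
Qed.

(* The Gauss equation: differentiate [l_uv . l_v = E'/2] in [u] and [l_uu . l_v = 0] in [v]. *)
Lemma gauss_equation u : -a < u < a ->
  Derive (Derive E) u = Derive E u ^ 2 / E u - 2 * E u ^ 2 + 2.
Proof.
  intros Hu. pose proof (rect_u u Hu) as Hd. pose proof (HE u Hu).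
  assert (K1 := dot_pu_eq a b (pv (pu l)) (pv l) u 0 (fun x => Derive E x / 2)
     (Derive (Derive E) u / 2) ltac:(smooth) ltac:(smooth) Hd
     ltac:(intros x Hx; exact (dot_luv_lv x 0 (rect_u x Hx)))
     ltac:(apply (is_derive_ext (fun x => / 2 * Derive E x)); [intros; unfold Rdiv; rring|];
           eapply is_derive_eq; [apply is_derive_scal, (is_derive_Derive_E u Hu)|];
           unfold Rdiv; rring)).
  assert (K2 := dot_pv_eq a b (pu (pu l)) (pv l) u 0 (fun _ => 0) 0 ltac:(smooth) ltac:(smooth) Hd
     ltac:(intros y Hy; exact (dot_luu_lv u y (conj Hu Hy))) (is_derive_const 0 0)).
  rewrite (smooth_on_v_Schwarz a b (pu l) u 0 ltac:(smooth) Hd),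
    (smooth_on_v_Schwarz a b l u 0 Hl Hd) in K1.
  rewrite (dot_comm (pu (pu l) u 0)), (gauss_lvv u 0 Hd), (gauss_luv u 0 Hd), !dot_vadd_l,
    !dot_vscal_l, (dot_comm (pu l u 0)), (dot_comm (l u 0)), (dot_comm (n u 0)),
    (dot_comm (pv l u 0) (vscal _ _)), dot_vscal_l, (dot_luu_lu u 0 Hd), (dot_luu_l u 0 Hd) in *.
  frame u 0 Hd. rewrite F_luun, F_lvlv in *. unfold christoffel in *.
  set (X := dot (pv (pu (pu l)) u 0) (pv l u 0)) in *.
  assert (HX : X = Derive E u / (2 * E u) * (Derive E u / 2) - E u * E u + 1) by lra.
  replace (Derive (Derive E) u) with (2 * (Derive (Derive E) u / 2)) by field.
  rewrite <- K1, HX. field. lra.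
Qed.

Lemma is_derive_log_E u : -a < u < a -> is_derive (fun x => ln (E x)) u (2 * christoffel E u).
Proof.
  intros Hu. pose proof (HE u Hu). eapply is_derive_eq.
  - apply (is_derive_Rcomp ln E u (/ E u)); [now apply is_derive_ln|exact (is_derive_E_Derive u Hu)].
  - unfold christoffel. rfield. lra.
Qed.

Lemma is_derive_christoffel u : -a < u < a ->
  is_derive (christoffel E) u (-2 * sinh (ln (E u))).
Proof.
  intros Hu. pose proof (HE u Hu). unfold christoffel. eapply is_derive_eq.
  - apply is_derive_div; [exact (is_derive_Derive_E u Hu)| |lra].
    apply is_derive_scal, (is_derive_E_Derive u Hu).
  - rewrite (gauss_equation u Hu). unfold sinh. rewrite exp_Ropp, exp_ln by lra. rfield. lra.
Qed.

Lemma christoffel_energy u : -a < u < a -> christoffel E u ^ 2 + E u + / E u = beta2 E.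
Proof.
  intros Hu. unfold beta2.
  rewrite Rplus_assoc, <- (two_cosh_ln (E u)) by auto.
  exact (sinh_ode_energy a (fun x => ln (E x)) (christoffel E) Ha
           is_derive_log_E is_derive_christoffel u Hu).
Qed.

Lemma beta2_pos : 0 < beta2 E.
Proof.
  rewrite <- (christoffel_energy 0) by lra. pose proof (HE 0 ltac:(lra)).
  pose proof (pow2_ge_0 (christoffel E 0)). pose proof (Rinv_0_lt_compat (E 0) H). lra.
Qed.

Lemma is_derive_inv_speed u : -a < u < a ->
  is_derive (inv_speed E) u (- inv_speed E u * christoffel E u).
Proof.
  intros Hu. unfold inv_speed. eapply is_derive_eq.
  - apply (is_derive_Rcomp exp (fun x => - ln (E x) / 2)); [apply is_derive_exp|].
    apply (is_derive_ext (fun x => (-1 / 2) * ln (E x))); [intros; unfold Rdiv; rring|].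
    apply is_derive_scal, (is_derive_log_E u Hu).
  - rfield.
Qed.

Lemma is_derive_lvv_0 v : -b < v < b ->
  is_derive_v (fun y => pv (pv l) 0 y) v (vscal (- beta2 E) (pv l 0 v)).
Proof.
  intros Hv pr Hp. pose proof (rect_v v Hv) as Hd. pose proof (HE 0 (proj1 Hd)).
  apply (is_derive_ext_interval (-b) b
    (fun y => - christoffel E 0 * pr (pu l 0 y) + - E 0 * pr (l 0 y) + -1 * pr (n 0 y))); auto.
  - intros y Hy. now rewrite (gauss_lvv 0 y (rect_v y Hy)), !coord_vadd, !coord_vscal.
  - eapply is_derive_eq.
    + apply is_derive_Rplus; [apply is_derive_Rplus|]; apply is_derive_scal;
        apply (smooth_on_v_is_derive_v (rect a b)); auto; smooth.
    + rewrite (gauss_luv 0 v Hd), (weingarten_nv 0 v Hd), !coord_vscal by auto.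
      rewrite <- (christoffel_energy 0) by lra. rfield. lra.
Qed.

(* [l_v / sqrt E] does not depend on [u], since [l_uv = (E_u / 2E) l_v]. *)
Lemma inv_speed_lv u v : -a < u < a -> -b < v < b ->
  vscal (inv_speed E u) (pv l u v) = vscal (inv_speed E 0) (pv l 0 v).
Proof.
  intros Hu Hv. apply V4_coord_ext. intros pr Hp. rewrite !coord_vscal by auto.
  apply (constant_on_interval (-a) a (fun x => inv_speed E x * pr (pv l x v))); auto; [|lra].
  intros x Hx. assert (Hd : rect a b x v) by now split.
  eapply is_derive_eq.
  - apply is_derive_Rmult; [exact (is_derive_inv_speed x Hx)|].
    apply (smooth_on_v_is_derive_u (rect a b)); auto. smooth.
  - rewrite (smooth_on_v_Schwarz a b l x v Hl Hd), (gauss_luv x v Hd), coord_vscal by auto.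
    rring.
Qed.

Hypothesis Hl0 : l 0 0 = e1.
Hypothesis Hlu0 : pu l 0 0 = vscal (sqrt (E 0)) e2.
Hypothesis Hlv0 : pv l 0 0 = vscal (sqrt (E 0)) e3.
Hypothesis Hn0 : n 0 0 = e4.

Let beta := sqrt (beta2 E).
Let circ := circle_pos (ln (E 0)) (christoffel E 0) beta.
Let circ' := circle_vel (ln (E 0)) (christoffel E 0) beta.

Lemma beta_sq : beta ^ 2 = beta2 E.
Proof. unfold beta. pose proof beta2_pos. rewrite <- Rsqr_pow2. apply Rsqr_sqrt. lra. Qed.

Lemma beta_neq0 : beta <> 0.
Proof. pose proof beta2_pos. pose proof beta_sq. intros Hz. rewrite Hz in *. simpl in *. lra. Qed.

Lemma sqrt_E0_facts : 0 < sqrt (E 0) /\ sqrt (E 0) * sqrt (E 0) = E 0 /\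
  inv_speed E 0 = / sqrt (E 0) /\ exp (ln (E 0) / 2) = sqrt (E 0).
Proof.
  pose proof (HE 0 ltac:(lra)). unfold inv_speed.
  rewrite exp_neg_half_ln, exp_half_ln by auto.
  split; [now apply sqrt_lt_R0|split; [now apply sqrt_sqrt; lra|auto]].
Qed.

Lemma inv_speed_lv_0 v : -b < v < b -> vscal (inv_speed E 0) (pv l 0 v) = circ' v.
Proof.
  intros Hv. apply V4_coord_ext. intros pr Hp. rewrite coord_vscal by auto.
  pose proof beta2_pos. pose proof beta_sq. pose proof beta_neq0.
  destruct sqrt_E0_facts as (Hr & Hr2 & Hinv & _).
  enough (Y : inv_speed E 0 * pr (pv l 0 v) - pr (circ' v) = 0) by lra.
  apply (harmonic_zero (-b) b (beta2 E) (fun y => inv_speed E 0 * pr (pv l 0 y) - pr (circ' y))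
           (fun y => inv_speed E 0 * pr (pv (pv l) 0 y) + beta2 E * pr (circ y))); auto; try lra.
  - intros y Hy. eapply is_derive_eq.
    + apply is_derive_Rminus; [apply is_derive_scal|apply (is_derive_circle_vel _ _ _ beta_neq0 y pr Hp)].
      apply (smooth_on_v_is_derive_v (rect a b)); [smooth|exact (rect_v y Hy)|auto].
    + rewrite coord_vscal, beta_sq by auto. unfold circ. rring.
  - intros y Hy. eapply is_derive_eq.
    + apply is_derive_Rplus; apply is_derive_scal;
        [apply (is_derive_lvv_0 y Hy pr Hp)|apply (is_derive_circle_pos _ _ _ beta_neq0 y pr Hp)].
    + rewrite coord_vscal by auto. unfold circ'. rring.
  - unfold circ'. rewrite Hlv0, circle_vel_0, coord_vscal, Hinv by auto. field. lra.
  - unfold circ. rewrite (gauss_lvv 0 0 (rect_v 0 ltac:(lra))), Hl0, Hlu0, Hn0, circle_pos_0.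
    unfold circle_axis. rewrite !coord_vadd, !coord_vscal, !coord_vadd, !coord_vscal by auto.
    destruct sqrt_E0_facts as (_ & _ & _ & Hh).
    replace (- ln (E 0) / 2) with (- (ln (E 0) / 2)) by field.
    rewrite exp_Ropp, Hh, Hinv, beta_sq. set (r := sqrt (E 0)) in *. rewrite <- Hr2. field. lra.
Qed.

Lemma inv_speed_lvv u : -a < u < a ->
  vscal (inv_speed E u) (pv (pv l) u 0) = vscal (- beta2 E) (circ 0).
Proof.
  intros Hu. apply V4_coord_ext. intros pr Hp. rewrite !coord_vscal by auto.
  assert (K : is_derive (fun y => inv_speed E u * pr (pv l u y)) 0
                (inv_speed E u * pr (pv (pv l) u 0))).
  { apply is_derive_scal, (smooth_on_v_is_derive_v (rect a b)); [smooth|exact (rect_u u Hu)|auto]. }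
  rewrite <- (is_derive_unique _ _ _ K). apply is_derive_unique.
  apply (is_derive_ext_interval (-b) b (fun y => pr (circ' y))); [lra| |].
  - intros y Hy. rewrite <- coord_vscal, inv_speed_lv, inv_speed_lv_0 by auto. reflexivity.
  - eapply is_derive_eq; [apply (is_derive_circle_vel _ _ _ beta_neq0 0 pr Hp)|].
    rewrite coord_vscal, beta_sq by auto. reflexivity.
Qed.

Let p u := vadd (vscal (inv_speed E u) (l u 0)) (vscal (-1) (circ 0)).

(* Integrating [l_v = sqrt E circ'] along the [v]-line. *)
Lemma l_representation u v : rect a b u v ->
  l u v = vscal (exp (ln (E u) / 2)) (vadd (p u) (circ v)).
Proof.
  intros [Hu Hv]. apply V4_coord_ext. intros pr Hp.
  assert (K : inv_speed E u * (pr (l u v) - pr (l u 0)) - pr (circ v) = - pr (circ 0)).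
  { replace (- pr (circ 0)) with (inv_speed E u * (pr (l u 0) - pr (l u 0)) - pr (circ 0)) by ring.
    apply (constant_on_interval (-b) b
             (fun y => inv_speed E u * (pr (l u y) - pr (l u 0)) - pr (circ y))); auto; [|lra].
    intros y Hy. eapply is_derive_eq.
    - apply is_derive_Rminus; [apply is_derive_scal, is_derive_Rminus; [|apply is_derive_const]|].
      + apply (smooth_on_v_is_derive_v (rect a b)); auto. now split.
      + apply (is_derive_circle_pos _ _ _ beta_neq0 y pr Hp).
    - change (circle_vel (ln (E 0)) (christoffel E 0) beta y) with (circ' y).
      rewrite <- (inv_speed_lv_0 y Hy), <- (inv_speed_lv u y Hu Hy), coord_vscal by auto.
      unfold zero; simpl. ring. }
  assert (Hinv : exp (ln (E u) / 2) * inv_speed E u = 1).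
  { unfold inv_speed. rewrite <- exp_plus. replace (ln (E u) / 2 + - ln (E u) / 2) with 0 by field.
    apply exp_0. }
  unfold p. rewrite coord_vscal, !coord_vadd, !coord_vscal by auto.
  transitivity (exp (ln (E u) / 2) * inv_speed E u * pr (l u v)); [rewrite Hinv; ring|].
  rewrite Rmult_assoc. f_equal. lra.
Qed.

Let p' u := vadd (vscal (- inv_speed E u * christoffel E u) (l u 0)) (vscal (inv_speed E u) (pu l u 0)).
Let p'' u :=
  vadd (vadd (vscal (inv_speed E u * christoffel E u ^ 2 + 2 * inv_speed E u * sinh (ln (E u)))
                    (l u 0))
             (vscal (-2 * inv_speed E u * christoffel E u) (pu l u 0)))
       (vscal (inv_speed E u) (pu (pu l) u 0)).

Lemma is_derive_p u : -a < u < a -> is_derive_v p u (p' u).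
Proof.
  intros Hu pr Hp. unfold p, p'.
  apply (is_derive_ext (fun x => inv_speed E x * pr (l x 0) + -1 * pr (circ 0))).
  { intros x. now rewrite coord_vadd, !coord_vscal. }
  rewrite coord_vadd, !coord_vscal by auto. eapply is_derive_eq.
  - apply is_derive_Rplus; [apply is_derive_Rmult|apply is_derive_const].
    + exact (is_derive_inv_speed u Hu).
    + apply (smooth_on_v_is_derive_u (rect a b)); [smooth|exact (rect_u u Hu)|auto].
  - unfold zero; simpl. ring.
Qed.

Lemma is_derive_p' u : -a < u < a -> is_derive_v p' u (p'' u).
Proof.
  intros Hu pr Hp. unfold p', p''.
  apply (is_derive_ext (fun x => -1 * (inv_speed E x * christoffel E x) * pr (l x 0)
                                 + inv_speed E x * pr (pu l x 0))).
  { intros x. rewrite coord_vadd, !coord_vscal by auto. rring. }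
  rewrite !coord_vadd, !coord_vscal by auto.
  assert (Hd := rect_u u Hu).
  eapply is_derive_eq.
  - apply is_derive_Rplus; apply is_derive_Rmult.
    + apply is_derive_scal, is_derive_Rmult;
        [exact (is_derive_inv_speed u Hu)|exact (is_derive_christoffel u Hu)].
    + apply (smooth_on_v_is_derive_u (rect a b)); [smooth|exact Hd|auto].
    + exact (is_derive_inv_speed u Hu).
    + apply (smooth_on_v_is_derive_u (rect a b)); [smooth|exact Hd|auto].
  - rring.
Qed.

(* With [l_uu = - l_vv - 2 E l] the equation reduces to the energy identity at [u]. *)
Lemma p_ode u : -a < u < a ->
  vadd (vadd (p'' u) (vscal (2 * christoffel E u) (p' u))) (vscal (beta2 E) (p u)) = vzero.
Proof.
  intros Hu. pose proof (HE u Hu) as HEu. assert (Hd := rect_u u Hu).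
  apply V4_coord_ext. intros pr Hp.
  assert (Hlvv := f_equal pr (inv_speed_lvv u Hu)).
  assert (Gluu := f_equal pr (gauss_luu u 0 Hd)).
  assert (Glvv := f_equal pr (gauss_lvv u 0 Hd)).
  rewrite !coord_vscal in Hlvv by auto.
  rewrite !coord_vadd, !coord_vscal in Gluu by auto.
  rewrite !coord_vadd, !coord_vscal in Glvv by auto.
  pose proof (christoffel_energy u Hu) as En.
  unfold p, p', p''. coord_simpl Hp.
  rewrite coord_vzero by auto.
  rewrite Gluu.
  assert (N : pr (n u 0) = - pr (pv (pv l) u 0) - christoffel E u * pr (pu l u 0)
                           - E u * pr (l u 0)) by (rewrite Glvv; ring).
  rewrite N. unfold sinh. rewrite exp_Ropp, exp_ln by auto.
  set (L := pr (l u 0)) in *. set (Lvv := pr (pv (pv l) u 0)) in *.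
  set (g := inv_speed E u) in *. set (c := christoffel E u) in *.
  transitivity (g * L * (beta2 E - (c ^ 2 + E u + / E u)) - (g * Lvv + beta2 E * pr (circ 0))).
  - field. lra.
  - rewrite Hlvv, En. ring.
Qed.

Lemma surface_representation :
  let z := fun u => ln (E u) in
  let s := z 0 in
  let t := Derive z 0 / 2 in
  let beta := sqrt (t ^ 2 + 2 * cosh s) in
  exists p : R -> V4,
    (forall u, -a < u < a ->
       ex_derive_v p u /\ ex_derive_v (Dv p) u /\
       vadd (vadd (Dv (Dv p) u) (vscal (Derive z u) (Dv p u))) (vscal (beta ^ 2) (p u)) = vzero) /\
    p 0 = vscal (/ beta ^ 2)
            (vadd (vadd (vscal (exp (- s / 2) * (t ^ 2 + exp (- s))) e1) (vscal (- t) e2))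
                  (vscal (- exp (- s / 2)) e4)) /\
    Dv p 0 = vadd (vscal (- t * exp (- s / 2)) e1) e2 /\
    (forall u v, rect a b u v ->
       l u v = vadd (vscal (exp (z u / 2)) (p u))
                 (vscal (exp (z u / 2) / beta ^ 2)
                    (vadd (vscal (cos (beta * v))
                             (vadd (vadd (vscal (exp (s / 2)) e1) (vscal t e2))
                                   (vscal (exp (- s / 2)) e4)))
                          (vscal (beta * sin (beta * v)) e3)))).
Proof.
  intros z s0 t0 beta0.
  assert (Hdz : forall u, -a < u < a -> Derive z u = 2 * christoffel E u)
    by (intros u Hu; apply is_derive_unique, is_derive_log_E, Hu).
  assert (Ht : t0 = christoffel E 0) by (unfold t0; rewrite Hdz by lra; field).
  assert (Hbeta : beta0 = beta) by (unfold beta0, beta, beta2, s0, z; now rewrite Ht).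
  assert (Hdp : forall u, -a < u < a -> Dv p u = p' u)
    by (intros u Hu; exact (is_derive_v_Dv _ _ _ (is_derive_p u Hu))).
  assert (Hdp' : forall u, -a < u < a -> is_derive_v (Dv p) u (p'' u)).
  { intros u Hu. apply (is_derive_v_ext_interval (-a) a p'); auto.
    - intros y Hy. now rewrite Hdp.
    - exact (is_derive_p' u Hu). }
  destruct sqrt_E0_facts as (Hr & Hr2 & Hinv & Hh). pose proof (HE 0 ltac:(lra)) as HE0.
  assert (Hs0 : exp (- s0 / 2) = / sqrt (E 0)).
  { unfold s0, z. replace (- ln (E 0) / 2) with (- (ln (E 0) / 2)) by field.
    now rewrite exp_Ropp, Hh. }
  exists p. split; [intros u Hu; split; [|split]|split; [|split]].
  - exact (is_derive_v_ex_derive_v _ _ _ (is_derive_p u Hu)).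
  - exact (is_derive_v_ex_derive_v _ _ _ (Hdp' u Hu)).
  - rewrite (is_derive_v_Dv _ _ _ (Hdp' u Hu)), (Hdp u Hu), Hbeta, beta_sq, (Hdz u Hu).
    exact (p_ode u Hu).
  - unfold p, circ. rewrite Hl0, Hinv, circle_pos_0, Hbeta, beta_sq, Hs0, Ht.
    unfold circle_axis. rewrite Hh, exp_neg_half_ln, <- (christoffel_energy 0) by lra.
    replace (exp (- s0)) with (/ E 0) by (unfold s0, z; cbv beta; rewrite exp_Ropp, exp_ln; lra).
    set (r := sqrt (E 0)) in *. set (c := christoffel E 0). rewrite <- Hr2.
    set (B := c ^ 2 + r * r + / (r * r)).
    assert (HB : / r = / B * (/ r * (c ^ 2 + / (r * r))) + / B * r).
    { unfold B. field. split; [lra|].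
      assert (0 <= (c ^ 2 + r * r) * (r * r)); [|lra].
      apply Rmult_le_pos; [apply Rplus_le_le_0_compat; [apply pow2_ge_0|]|]; apply Rle_0_sqr. }
    apply V4_ext; vec_cbv; lra.
  - rewrite (Hdp 0 ltac:(lra)). unfold p'. rewrite Hl0, Hlu0, Hs0, Hinv, Ht.
    apply V4_ext; vec_cbv; field; lra.
  - intros u v Huv. rewrite (l_representation u v Huv), Hbeta.
    apply V4_coord_ext. intros pr Hp. unfold circ, circle_pos, circle_axis, s0, z.
    coord_simpl Hp. rewrite Ht. unfold Rdiv. rring.
Qed.

End Surface.

Theorem theorem2p4 (a b : R) (l n : R -> R -> V4) (E : R -> R) :
  0 < a -> 0 < b ->
  let D := fun u v => -a < u < a /\ -b < v < b in
  smooth_on_v D l -> smooth_on_v D n ->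
  (forall u, -a < u < a -> 0 < E u) ->
  (forall u v, D u v ->
     dot (l u v) (l u v) = 1 /\
     dot (pu l u v) (pu l u v) = E u /\
     dot (pv l u v) (pv l u v) = E u /\
     dot (pu l u v) (pv l u v) = 0 /\
     dot (n u v) (n u v) = 1 /\
     dot (n u v) (l u v) = 0 /\
     dot (n u v) (pu l u v) = 0 /\
     dot (n u v) (pv l u v) = 0 /\
     dot (pu (pu l) u v) (n u v) = 1 /\
     dot (pv (pu l) u v) (n u v) = 0 /\
     dot (pv (pv l) u v) (n u v) = -1) ->
  (forall u v, D u v -> mean_curvature l n u v = 0) ->
  (forall u v, D u v -> exists lam, pv n u v = vscal lam (pv l u v)) ->
  (forall u, -a < u < a -> is_circle_on (fun v => -b < v < b) (fun v => l u v)) ->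
  ~ (exists K0, forall u v, D u v -> gauss_curvature l u v = K0) ->
  l 0 0 = e1 -> pu l 0 0 = vscal (sqrt (E 0)) e2 ->
  pv l 0 0 = vscal (sqrt (E 0)) e3 -> n 0 0 = e4 ->
  let z := fun u => ln (E u) in
  let s := z 0 in
  let t := Derive z 0 / 2 in
  let beta := sqrt (t ^ 2 + 2 * cosh s) in
  ((forall u, -a < u < a -> Derive (Derive z) u + 4 * sinh (z u) = 0) /\
   z 0 = s /\ Derive z 0 = 2 * t) /\
  (exists alpha u0 : R, 0 < alpha /\
     exists hinv : R -> R,
       (forall x, hinv (h_fun alpha x) = x) /\
       (forall y, h_fun alpha (hinv y) = y) /\
       (forall u, -a < u < a ->
          z u = ln ((alpha ^ 2 * cos (hinv (u + u0)) ^ 2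
                     + sin (hinv (u + u0)) ^ 2) / alpha))) /\
  (exists p : R -> V4,
     (forall u, -a < u < a ->
        ex_derive_v p u /\ ex_derive_v (Dv p) u /\
        vadd (vadd (Dv (Dv p) u) (vscal (Derive z u) (Dv p u)))
             (vscal (beta ^ 2) (p u)) = vzero) /\
     p 0 = vscal (/ beta ^ 2)
             (vadd (vadd (vscal (exp (- s / 2) * (t ^ 2 + exp (- s))) e1)
                         (vscal (- t) e2))
                   (vscal (- exp (- s / 2)) e4)) /\
     Dv p 0 = vadd (vscal (- t * exp (- s / 2)) e1) e2 /\
     (forall u v, D u v ->
        l u v = vadd (vscal (exp (z u / 2)) (p u))
                  (vscal (exp (z u / 2) / beta ^ 2)
                     (vadd (vscal (cos (beta * v))
                              (vadd (vadd (vscal (exp (s / 2)) e1) (vscal t e2))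
                                    (vscal (exp (- s / 2)) e4)))
                           (vscal (beta * sin (beta * v)) e3))))).
Proof.
  intros Ha Hb D Hl Hn HE Hframe _ _ _ _ Hl0 Hlu0 Hlv0 Hn0 z s t beta.
  assert (Hz : forall u, -a < u < a -> is_derive z u (2 * christoffel E u))
    by exact (is_derive_log_E a b l n E Hb Hl HE Hframe).
  assert (Hc : forall u, -a < u < a -> is_derive (christoffel E) u (-2 * sinh (z u)))
    by exact (is_derive_christoffel a b l n E Hb Hl HE Hframe).
  split; [split; [|split]|split].
  - exact (sinh_ode_second_derivative a z (christoffel E) Hz Hc).
  - reflexivity.
  - unfold t. field.
  - exact (sinh_ode_explicit a z (christoffel E) Ha Hz Hc).
  - exact (surface_representation a b l n E Ha Hb Hl Hn HE Hframe Hl0 Hlu0 Hlv0 Hn0).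
Qed.
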